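(* There is no computable probability measure $\xi$ on $2^\omega$ such that for every computable $c\in[0,1]$ we have $\mathsf{MLR}_\xi\cap\mathsf{MLR}_{\mu_c}\neq\emptyset$. (In the paper's words: there is no computable mixture of Bernoulli measures that includes all computable Bernoulli measures.)
   Context: For $p\in[0,1]$ the Bernoulli measure $\mu_p$ on $2^\omega$ is determined by $\mu_p(\llbracket\sigma\rrbracket)=p^{\#_0(\sigma)}(1-p)^{\#_1(\sigma)}$, where $\#_i(\sigma)$ is the number of occurrences of $i$ in $\sigma$. For computable $\mu$, $\mathsf{MLR}_\mu$ denotes the set of $\mu$-Martin-Löf random sequences. *)

From Stdlib Require Import Reals List Arith.
Import ListNotations.
Open Scope R_scope.

Inductive code : Type :=
| CZero : code
| CSucc : code
| CProj : nat -> code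
| CComp : code -> list code -> code
| CPrec : code -> code -> code
| CMu   : code -> code.

Inductive eval : code -> list nat -> nat -> Prop :=
| ev_zero : forall args, eval CZero args 0
| ev_succ : forall x args, eval CSucc (x :: args) (S x)
| ev_proj : forall i args, eval (CProj i) args (nth i args 0%nat)
| ev_comp : forall f gs args ys y,
    evals gs args ys -> eval f ys y -> eval (CComp f gs) args y
| ev_prec0 : forall f g args y,
    eval f args y -> eval (CPrec f g) (0%nat :: args) y
| ev_precS : forall f g n args r y,
    eval (CPrec f g) (n :: args) r ->
    eval g (n :: r :: args) y ->
    eval (CPrec f g) (S n :: args) y
| ev_mu : forall f args n,
    eval f (n :: args) 0%nat ->
    (forall m, (m < n)%nat -> exists k, eval f (m :: args) (S k)) ->
    eval (CMu f) args n
with evals : list code -> list nat -> list nat -> Prop :=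
| evs_nil : forall args, evals [] args []
| evs_cons : forall g gs args y ys,
    eval g args y -> evals gs args ys -> evals (g :: gs) args (y :: ys).

Definition computable1 (f : nat -> nat) : Prop :=
  exists c, forall x, eval c [x] (f x).
Definition computable2 (f : nat -> nat -> nat) : Prop :=
  exists c, forall x y, eval c [x; y] (f x y).

(* enumeration of pairs along diagonals *)
Fixpoint unpair (n : nat) : nat * nat :=
  match n with
  | O => (0%nat, 0%nat)
  | S n' => let (a, b) := unpair n' in
            match a with O => (S b, 0%nat) | S a' => (a', S b) end
  end.

(* integers coded by naturals: 0,-1,1,-2,2,... *)
Definition int_of_nat (a : nat) : R :=
  if Nat.even a then INR (Nat.div a 2) else - INR (Nat.div (a + 1) 2).

Definition rat_of_nat (n : nat) : R :=
  let (a, b) := unpair n in int_of_nat a / INR (S b).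

(* binary strings coded bijectively by naturals *)
Fixpoint code_str (s : list bool) : nat :=
  match s with
  | [] => 0%nat
  | b :: s' => (2 * code_str s' + (if b then 2 else 1))%nat
  end.

Definition computable_real (x : R) : Prop :=
  exists f : nat -> nat, computable1 f /\
    forall n, Rabs (rat_of_nat (f n) - x) <= / 2 ^ n.

(* A Borel probability measure on 2^omega is determined by its values on
   cylinders [sigma]; we represent it by sigma |-> mu([sigma]). *)
Definition is_prob_measure (mu : list bool -> R) : Prop :=
  mu [] = 1 /\
  (forall s, 0 <= mu s) /\
  (forall s, mu s = mu (s ++ [false]) + mu (s ++ [true])).

Definition computable_measure (mu : list bool -> R) : Prop :=
  exists f : nat -> nat -> nat, computable2 f /\
    forall s n, Rabs (rat_of_nat (f (code_str s) n) - mu s) <= / 2 ^ n.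

Definition count_bool (b : bool) (s : list bool) : nat :=
  length (filter (fun x => Bool.eqb x b) s).

Definition bernoulli (p : R) (s : list bool) : R :=
  p ^ count_bool false s * (1 - p) ^ count_bool true s.

Definition is_prefix (s t : list bool) : Prop := exists u, t = s ++ u.

Definition prefix_free (L : list (list bool)) : Prop :=
  NoDup L /\ forall s t, In s L -> In t L -> s <> t -> ~ is_prefix s t.

Definition sum_measure (mu : list bool -> R) (L : list (list bool)) : R :=
  fold_right (fun s acc => mu s + acc) 0 L.

(* mu([W]) <= r, where [W] is the open set generated by W *)
Definition open_measure_le (mu : list bool -> R) (W : list bool -> Prop) (r : R)
  : Prop :=
  forall L, prefix_free L -> (forall s, In s L -> W s) -> sum_measure mu L <= r.

Definition prefix (X : nat -> bool) (k : nat) : list bool := map X (seq 0 k).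

Definition in_open (W : list bool -> Prop) (X : nat -> bool) : Prop :=
  exists k, W (prefix X k).

Definition unif_ce (U : nat -> list bool -> Prop) : Prop :=
  exists c, forall n s, U n s <-> exists y, eval c [n; code_str s] y.

Definition ML_test (mu : list bool -> R) (U : nat -> list bool -> Prop) : Prop :=
  unif_ce U /\ forall n, open_measure_le mu (U n) (/ 2 ^ n).

Definition MLR (mu : list bool -> R) (X : nat -> bool) : Prop :=
  forall U, ML_test mu U -> exists n, ~ in_open (U n) X.

From Stdlib Require Import Reals List Arith Lia Lra Bool FunctionalExtensionality.
Import ListNotations.

(* Given xi with a computable approximation f, we compute c in [0,1] as the
   limit of nested intervals.  At stage m the current interval is cut into
   nwindows m windows; window j collects the strings of length block_len m
   whose frequency of zeros lies in it.  The windows are disjoint, so one of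
   them is xi-light; using f we effectively choose a window of xi-mass at
   most 2^-(m+1) and shrink the interval to its middle half.  Then c is far
   from the other windows, and Chebyshev bounds the mu_c-mass of the strings
   outside the chosen window by 2^-(m+1).  Over the stages m > n, the strings
   inside (resp. outside) the chosen windows form a xi-ML test V (resp. a
   mu_c-ML test U), and every sequence is caught by U or by V. *)

Open Scope nat_scope.

(* A program in which every [CMu] node is used only as a
   binary oracle call is evaluated by [run fx], which interprets those
   calls by [fx]; replacing them with a code for [fx] ([plug]) gives an
   ordinary program with the same (total) behaviour. *)
Section Run.
Variable fx : nat -> nat -> nat.

Fixpoint run (c : code) (l : list nat) {struct c} : nat :=
  match c with
  | CZero => 0
  | CSucc => S (nth 0 l 0)
  | CProj i => nth i l 0
  | CComp f gs => run f (map (fun g => run g l) gs)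
  | CPrec f g =>
      match l with
      | [] => 0
      | n :: ps => nat_rect (fun _ => nat) (run f ps)
                     (fun m r => run g (m :: r :: ps)) n
      end
  | CMu _ => fx (nth 0 l 0) (nth 1 l 0)
  end.
End Run.

(* Syntactic class of programs on which [run] agrees with [eval]:
   successor, recursion and oracle nodes only occur applied to argument
   lists of the right shape. *)
Fixpoint prim_prog (c : code) : bool :=
  match c with
  | CZero | CProj _ => true
  | CComp f gs =>
      (match f with
       | CSucc => negb (Nat.eqb (length gs) 0)
       | CMu _ => Nat.eqb (length gs) 2
       | CPrec f' g' => negb (Nat.eqb (length gs) 0) && prim_prog f' && prim_prog g'
       | _ => prim_prog f
       end) && forallb prim_prog gs
  | CSucc | CPrec _ _ | CMu _ => false
  end.

Fixpoint plug (cx : code) (c : code) : code :=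
  match c with
  | CComp f gs => CComp (plug cx f) (map (plug cx) gs)
  | CPrec f g => CPrec (plug cx f) (plug cx g)
  | CMu _ => cx
  | c => c
  end.

Lemma plug_prec_eval cx f g F G :
  (forall l, eval (plug cx f) l (F l)) ->
  (forall l, eval (plug cx g) l (G l)) ->
  forall n ps, eval (CPrec (plug cx f) (plug cx g)) (n :: ps)
     (nat_rect (fun _ => nat) (F ps) (fun m r => G (m :: r :: ps)) n).
Proof.
  intros Hf Hg n ps; induction n; simpl.
  - constructor; auto.
  - econstructor; eauto.
Qed.

Theorem plug_eval (cx : code) (fx : nat -> nat -> nat) :
  (forall x y, eval cx [x; y] (fx x y)) ->
  forall c, prim_prog c = true -> forall l, eval (plug cx c) l (run fx c l).
Proof.
  intros Hcx. fix IH 1.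
  intros c Hc l; destruct c as [| | i | f gs | f g | f]; simpl in Hc; try discriminate.
  - constructor.
  - constructor.
  - apply andb_prop in Hc as [Hf Hgs].
    assert (Hargs : forall l, evals (map (plug cx) gs) l (map (fun g => run fx g l) gs)).
    { clear Hf. revert Hgs. generalize gs. fix IHl 1. intros gs0 Hgs l'.
      destruct gs0 as [|g gs0]; simpl in Hgs |- *.
      - constructor.
      - apply andb_prop in Hgs as [H1 H2].
        constructor; [apply IH; exact H1 | apply IHl; exact H2]. }
    pose proof (IH f) as IHf.
    simpl. destruct f as [| | i | f1 gs1 | f1 g1 | f1].
    + econstructor; [apply Hargs | constructor].
    + destruct gs as [|g gs]; [discriminate|].
      econstructor; [apply Hargs | constructor].
    + econstructor; [apply Hargs | constructor].
    + econstructor; [apply Hargs | apply IHf; exact Hf].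
    + apply andb_prop in Hf as [Hf Hg1]. apply andb_prop in Hf as [Hne Hf1].
      destruct gs as [|g gs]; [discriminate|].
      econstructor; [apply Hargs|].
      apply (plug_prec_eval cx f1 g1 (run fx f1) (run fx g1));
        intros; apply IH; assumption.
    + destruct gs as [|g1 [|g2 [|g3 gs]]]; try discriminate.
      econstructor; [apply Hargs | apply Hcx].
Qed.

Fixpoint eval_deterministic c l y (H : eval c l y) {struct H} :
  forall y', eval c l y' -> y = y'
with evals_deterministic cs l ys (H : evals cs l ys) {struct H} :
  forall ys', evals cs l ys' -> ys = ys'.
Proof.
  - destruct H as [args|x args|i args|f gs args ys y Hgs Hf|f g args y Hf
                  |f g n args r y Hr Hg|f args n Hf Hlt];
      intros y' H'; inversion H'; subst; auto.
    + match goal with H1 : evals gs args ?z |- _ =>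
        assert (E : ys = z) by (exact (evals_deterministic _ _ _ Hgs _ H1)) end. subst.
      match goal with H1 : eval f _ y' |- _ => exact (eval_deterministic _ _ _ Hf _ H1) end.
    + match goal with H1 : eval f args y' |- _ => exact (eval_deterministic _ _ _ Hf _ H1) end.
    + match goal with H1 : eval (CPrec f g) _ ?z |- _ =>
        assert (E : r = z) by (exact (eval_deterministic _ _ _ Hr _ H1)) end. subst.
      match goal with H1 : eval g _ y' |- _ => exact (eval_deterministic _ _ _ Hg _ H1) end.
    + rename y' into n'.
      match goal with H1 : forall m, m < n' -> _ |- _ => rename H1 into Hlt' end.
      match goal with H1 : eval f (n' :: args) 0 |- _ => rename H1 into Hf' end.
      destruct (Nat.lt_trichotomy n n') as [Hl|[Hl|Hl]]; auto.
      * destruct (Hlt' n Hl) as [k Hk]. apply (eval_deterministic _ _ _ Hf) in Hk. discriminate.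
      * destruct (Hlt n' Hl) as [k Hk]. apply (eval_deterministic _ _ _ Hk) in Hf'. discriminate.
  - destruct H as [args|g gs args y ys Hg Hgs]; intros ys' H'; inversion H'; subst; auto.
    match goal with H1 : eval g args ?z, H2 : evals gs args ?zs |- _ =>
      f_equal; [exact (eval_deterministic _ _ _ Hg _ H1)
               | exact (evals_deterministic _ _ _ Hgs _ H2)] end.
Qed.

Definition pArg i := CProj i.
Fixpoint pConst n := match n with 0 => CZero | S n => CComp CSucc [pConst n] end.
Definition pSucc a := CComp CSucc [a].
Definition pRec b s cnt ps := CComp (CPrec b s) (cnt :: ps).
Definition pOracle a b := CComp (CMu CZero) [a; b].

Definition prog_add := pRec (pArg 0) (pSucc (pArg 1)) (pArg 0) [pArg 1].
Definition pAdd a b := CComp prog_add [a; b].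
Definition prog_mul := pRec (pConst 0) (pAdd (pArg 1) (pArg 2)) (pArg 0) [pArg 1].
Definition pMul a b := CComp prog_mul [a; b].
Definition prog_pred := pRec (pConst 0) (pArg 0) (pArg 0) [].
Definition pPred a := CComp prog_pred [a].
Definition prog_sub := pRec (pArg 0) (pPred (pArg 1)) (pArg 1) [pArg 0].
Definition pSub a b := CComp prog_sub [a; b].
Definition prog_pow2 := pRec (pConst 1) (pAdd (pArg 1) (pArg 1)) (pArg 0) [].
Definition pPow2 a := CComp prog_pow2 [a].
Definition prog_iszero := pRec (pConst 1) (pConst 0) (pArg 0) [].
Definition pIsZero a := CComp prog_iszero [a].
Definition pLeb a b := pIsZero (pSub a b).
Definition pLtb a b := pLeb (pSucc a) b.
Definition pEqb a b := pMul (pLeb a b) (pLeb b a).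
Definition pNonZero a := pIsZero (pIsZero a).
Definition pIf c a b := pAdd (pMul (pNonZero c) a) (pMul (pIsZero c) b).

(* Inside the step of a recursion the parameters sit behind the counter and
   the accumulator; [shift_args k] passes them on to a sub-program. *)
Definition shift_args (k : nat) := map (fun i => pArg (S (S i))) (seq 0 k).
Definition pSum F cnt ps :=
  pRec (pConst 0) (pAdd (pArg 1) (CComp F (pArg 0 :: shift_args (length ps)))) cnt ps.
Definition pFind F cnt ps :=
  pRec (pConst 0)
    (pAdd (pArg 1) (pMul (pEqb (pArg 1) (pArg 0))
                         (pIsZero (CComp F (pArg 0 :: shift_args (length ps)))))) cnt ps.
Definition prog_div :=
  pSum (pLeb (pMul (pSucc (pArg 0)) (pArg 2)) (pArg 1)) (pArg 0) [pArg 0; pArg 1].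
Definition pDiv a b := CComp prog_div [a; b].

Arguments pArg : simpl never.
Arguments pSucc : simpl never.
Arguments pOracle : simpl never.
Arguments pRec : simpl never.
Arguments pAdd : simpl never.
Arguments pMul : simpl never.
Arguments pPred : simpl never.
Arguments pSub : simpl never.
Arguments pPow2 : simpl never.
Arguments pIsZero : simpl never.
Arguments pLeb : simpl never.
Arguments pLtb : simpl never.
Arguments pEqb : simpl never.
Arguments pNonZero : simpl never.
Arguments pIf : simpl never.
Arguments pSum : simpl never.
Arguments pFind : simpl never.
Arguments pDiv : simpl never.

(* The mathematical meaning of [pSum] and [pFind]: bounded sums, and the
   first index below [n] where [f] is nonzero ([n] if there is none). *)
Fixpoint natsum n (f : nat -> nat) := match n with 0 => 0 | S n => natsum n f + f n end.
Fixpoint find_first n (f : nat -> nat) :=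
  match n with
  | 0 => 0
  | S n => let r := find_first n f in
           r + (if r =? n then (if f n =? 0 then 1 else 0) else 0)
  end.

Lemma natsum_ext n f g : (forall i, i < n -> f i = g i) -> natsum n f = natsum n g.
Proof. induction n; cbn [natsum]; intros; auto. rewrite IHn, H; auto. Qed.

Lemma natsum_lt_count n q : natsum n (fun k => if k <? q then 1 else 0) = Nat.min n q.
Proof.
  induction n; cbn [natsum]; [lia|]. rewrite IHn.
  destruct (n <? q) eqn:E; [apply Nat.ltb_lt in E | apply Nat.ltb_ge in E]; lia.
Qed.

Lemma natsum_div x y : 0 < y ->
  natsum x (fun k => if S k * y <=? x then 1 else 0) = x / y.
Proof.
  intros Hy. rewrite (natsum_ext _ _ (fun k => if k <? x / y then 1 else 0)).
  - rewrite natsum_lt_count. assert (x / y <= x) by (apply Nat.Div0.div_le_upper_bound; nia). lia.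
  - intros i _. destruct (S i * y <=? x) eqn:E; destruct (i <? x / y) eqn:F; auto.
    + apply Nat.leb_le in E. apply Nat.ltb_ge in F.
      assert (S i <= x / y) by (apply Nat.div_le_lower_bound; lia). lia.
    + apply Nat.leb_gt in E. apply Nat.ltb_lt in F.
      assert (y * (x / y) <= x) by (apply Nat.Div0.mul_div_le). nia.
Qed.

Section RunBlocks.
Variable fx : nat -> nat -> nat.
Notation run := (run fx).

Lemma run_Arg i l : run (pArg i) l = nth i l 0. Proof. reflexivity. Qed.
Lemma run_Const n l : run (pConst n) l = n. Proof. induction n; simpl; auto. Qed.
Lemma run_Succ a l : run (pSucc a) l = S (run a l). Proof. reflexivity. Qed.
Lemma run_Oracle a b l : run (pOracle a b) l = fx (run a l) (run b l). Proof. reflexivity. Qed.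
Lemma run_Comp f gs l : run (CComp f gs) l = run f (map (fun g => run g l) gs).
Proof. reflexivity. Qed.
Lemma run_Rec b s cnt ps l : run (pRec b s cnt ps) l =
  nat_rect (fun _ => nat) (run b (map (fun g => run g l) ps))
    (fun m r => run s (m :: r :: map (fun g => run g l) ps)) (run cnt l).
Proof. reflexivity. Qed.

Ltac run_unfold :=
  repeat (rewrite ?run_Comp, ?run_Rec, ?run_Arg, ?run_Const, ?run_Succ; cbn [map nth]).

Lemma run_Add a b l : run (pAdd a b) l = run a l + run b l.
Proof.
  unfold pAdd, prog_add. run_unfold.
  induction (run a l); cbn [nat_rect]; run_unfold; auto. rewrite IHn. auto.
Qed.

Lemma run_Mul a b l : run (pMul a b) l = run a l * run b l.
Proof.
  unfold pMul, prog_mul. run_unfold.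
  induction (run a l); cbn [nat_rect]; run_unfold; auto.
  rewrite run_Add. run_unfold. rewrite IHn. lia.
Qed.

Lemma run_Pred a l : run (pPred a) l = pred (run a l).
Proof. unfold pPred, prog_pred. run_unfold. destruct (run a l); reflexivity. Qed.

Lemma run_Sub a b l : run (pSub a b) l = run a l - run b l.
Proof.
  unfold pSub, prog_sub. run_unfold.
  induction (run b l); cbn [nat_rect]; run_unfold; [lia|].
  rewrite run_Pred. run_unfold. rewrite IHn. lia.
Qed.

Lemma run_Pow2 a l : run (pPow2 a) l = 2 ^ run a l.
Proof.
  unfold pPow2, prog_pow2. run_unfold.
  induction (run a l); cbn [nat_rect]; run_unfold; auto.
  rewrite run_Add. run_unfold. rewrite IHn. simpl. lia.
Qed.

Lemma run_IsZero a l : run (pIsZero a) l = if run a l =? 0 then 1 else 0.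
Proof. unfold pIsZero, prog_iszero. run_unfold. destruct (run a l); reflexivity. Qed.

Lemma run_Leb a b l : run (pLeb a b) l = if run a l <=? run b l then 1 else 0.
Proof.
  unfold pLeb. rewrite run_IsZero, run_Sub.
  destruct (run a l <=? run b l) eqn:E; [apply Nat.leb_le in E | apply Nat.leb_gt in E];
  destruct (run a l - run b l =? 0) eqn:F; auto;
  [apply Nat.eqb_neq in F | apply Nat.eqb_eq in F]; lia.
Qed.

Lemma run_Ltb a b l : run (pLtb a b) l = if run a l <? run b l then 1 else 0.
Proof. unfold pLtb. rewrite run_Leb, run_Succ. reflexivity. Qed.

Lemma run_Eqb a b l : run (pEqb a b) l = if run a l =? run b l then 1 else 0.
Proof.
  unfold pEqb. rewrite run_Mul, !run_Leb.
  destruct (run a l =? run b l) eqn:E; [apply Nat.eqb_eq in E | apply Nat.eqb_neq in E].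
  - rewrite E, Nat.leb_refl. auto.
  - destruct (run a l <=? run b l) eqn:E1; destruct (run b l <=? run a l) eqn:E2; auto.
    apply Nat.leb_le in E1, E2. lia.
Qed.

Lemma run_NonZero a l : run (pNonZero a) l = if run a l =? 0 then 0 else 1.
Proof. unfold pNonZero. rewrite !run_IsZero. destruct (run a l =? 0); auto. Qed.

Lemma run_If c a b l : run (pIf c a b) l = if run c l =? 0 then run b l else run a l.
Proof.
  unfold pIf. rewrite run_Add, !run_Mul, run_NonZero, run_IsZero.
  destruct (run c l =? 0); lia.
Qed.

Lemma run_shift_args k m r vs : length vs = k ->
  map (fun g => run g (m :: r :: vs)) (shift_args k) = vs.
Proof.
  intros <-. unfold shift_args. rewrite map_map. simpl.
  induction vs as [|v vs IH] using rev_ind; auto.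
  rewrite length_app, seq_app, map_app. simpl.
  rewrite app_nth2 by lia. rewrite Nat.sub_diag. simpl. f_equal.
  rewrite <- IH at 2. apply map_ext_in. intros a Ha. apply in_seq in Ha.
  rewrite app_nth1 by lia. reflexivity.
Qed.

Lemma run_Sum F cnt ps l : run (pSum F cnt ps) l =
  natsum (run cnt l) (fun i => run F (i :: map (fun g => run g l) ps)).
Proof.
  unfold pSum. rewrite run_Rec. induction (run cnt l); cbn [nat_rect].
  { rewrite run_Const. auto. }
  rewrite run_Add, IHn, run_Arg, run_Comp. cbn [map nth natsum]. f_equal.
  rewrite run_Arg, run_shift_args by (rewrite length_map; auto). reflexivity.
Qed.

Lemma run_Find F cnt ps l : run (pFind F cnt ps) l =
  find_first (run cnt l) (fun i => run F (i :: map (fun g => run g l) ps)).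
Proof.
  unfold pFind. rewrite run_Rec. induction (run cnt l); cbn [nat_rect].
  { rewrite run_Const. auto. }
  rewrite run_Add, run_Mul, run_Eqb, run_IsZero, !run_Arg, run_Comp. cbn [map nth].
  rewrite IHn. cbn [find_first]. rewrite run_Arg. cbn [nth].
  rewrite run_shift_args by (rewrite length_map; auto).
  destruct (_ =? n); destruct (_ =? 0); lia.
Qed.

Lemma run_Div a b l : 0 < run b l -> run (pDiv a b) l = run a l / run b l.
Proof.
  intros Hb. unfold pDiv. rewrite run_Comp. unfold prog_div. rewrite run_Sum. cbn [map].
  rewrite run_Arg. cbn [nth]. rewrite <- natsum_div by auto. apply natsum_ext. intros i _.
  rewrite run_Leb, run_Mul, run_Succ, !run_Arg. reflexivity.
Qed.
End RunBlocks.

(* Arithmetic behind the codings.  [unpair] walks the diagonals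
   of N x N: [2 n = tri2 d + 2 b] where [d = a + b] is the diagonal of
   [unpair n = (a, b)] and [tri2 d = d (d + 1)].  This yields closed forms
   (computable by bounded sums) for both components of [unpair] and an
   explicit inverse [pairing]. *)
Definition tri2 d := d * S d.

Lemma tri2_mono d d' : d <= d' -> tri2 d <= tri2 d'.
Proof. unfold tri2; nia. Qed.

Lemma unpair_spec n : 2 * n = tri2 (fst (unpair n) + snd (unpair n)) + 2 * snd (unpair n).
Proof.
  induction n; simpl; auto.
  destruct (unpair n) as [a b]; simpl in *. destruct a; simpl; unfold tri2 in *; nia.
Qed.

Lemma tri2_split D b D' b' :
  b <= D -> b' <= D' -> tri2 D + 2 * b = tri2 D' + 2 * b' -> D = D' /\ b = b'.
Proof.
  intros H1 H2 H3.
  assert (D = D').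
  { destruct (Nat.lt_trichotomy D D') as [h|[h|h]]; auto.
    - assert (tri2 (S D) <= tri2 D') by (apply tri2_mono; lia). unfold tri2 in *; nia.
    - assert (tri2 (S D') <= tri2 D) by (apply tri2_mono; lia). unfold tri2 in *; nia. }
  subst; split; auto; lia.
Qed.

Lemma tri2_even d : tri2 d / 2 * 2 = tri2 d.
Proof.
  unfold tri2. induction d. simpl; auto.
  replace (S d * S (S d)) with (d * S d + (d + 1) * 2) by nia.
  rewrite Nat.div_add by lia. set (q := d * S d / 2) in *. set (r := d * S d) in *. lia.
Qed.

Definition unpair_diag n := natsum n (fun i => if S i * S (S i) <=? 2 * n then 1 else 0).
Definition unpair_snd n := n - tri2 (unpair_diag n) / 2.
Definition unpair_fst n := unpair_diag n - unpair_snd n.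

Lemma unpair_diag_spec n : unpair_diag n = fst (unpair n) + snd (unpair n).
Proof.
  pose proof (unpair_spec n) as H.
  destruct (unpair n) as [a b]; simpl in *.
  unfold unpair_diag. rewrite (natsum_ext _ _ (fun i => if i <? a + b then 1 else 0)).
  - rewrite natsum_lt_count. assert (a + b <= n) by (unfold tri2 in H; nia). lia.
  - intros i _. destruct (S i * S (S i) <=? 2 * n) eqn:E; destruct (i <? a + b) eqn:F; auto.
    + apply Nat.leb_le in E. apply Nat.ltb_ge in F. unfold tri2 in H. nia.
    + apply Nat.leb_gt in E. apply Nat.ltb_lt in F. unfold tri2 in H. nia.
Qed.

Lemma unpair_fst_snd n : unpair n = (unpair_fst n, unpair_snd n).
Proof.
  pose proof (unpair_spec n) as H. pose proof (unpair_diag_spec n) as H2.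
  unfold unpair_fst, unpair_snd. rewrite H2.
  destruct (unpair n) as [a b]; cbn [fst snd] in *.
  pose proof (tri2_even (a + b)).
  assert (tri2 (a + b) / 2 + b = n) by lia.
  f_equal; lia.
Qed.

Definition pairing a b := tri2 (a + b) / 2 + b.

Lemma unpair_pairing a b : unpair (pairing a b) = (a, b).
Proof.
  pose proof (unpair_spec (pairing a b)) as H.
  destruct (unpair (pairing a b)) as [a' b'] eqn:E; simpl in *.
  unfold pairing in H. pose proof (tri2_even (a + b)).
  assert (tri2 (a' + b') + 2 * b' = tri2 (a + b) + 2 * b) by lia.
  apply tri2_split in H1; try lia. destruct H1. f_equal; lia.
Qed.

(* A string read as a binary numeral, first letter = lowest bit; its code
   [code_str s] is [bin_value s + 2^|s| - 1]. *)
Fixpoint bin_value (s : list bool) : nat :=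
  match s with [] => 0 | b :: s => (if b then 1 else 0) + 2 * bin_value s end.

Lemma code_str_bin_value (s : list bool) : code_str s + 1 = bin_value s + 2 ^ length s.
Proof. induction s as [|b s IH]; simpl; auto. destruct b; simpl; lia. Qed.

Lemma bin_value_lt (s : list bool) : bin_value s < 2 ^ length s.
Proof. induction s as [|b s IH]; simpl; auto. destruct b; lia. Qed.

Lemma bin_value_app s b : bin_value (s ++ [b]) = bin_value s + (if b then 2 ^ length s else 0).
Proof.
  induction s as [|a s IH]; simpl.
  - destruct b; simpl; lia.
  - rewrite IH. destruct a, b; simpl; lia.
Qed.

Definition bit t i := (t / 2 ^ i) mod 2.
Definition popcount t L := natsum L (fun i => bit t i).

Lemma natsum_shift n f : natsum (S n) f = f 0 + natsum n (fun i => f (S i)).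
Proof. induction n; cbn [natsum] in *; auto. rewrite IHn. cbn [natsum]. lia. Qed.

Lemma bit_cons (b : bool) t i : bit ((if b then 1 else 0) + 2 * t) (S i) = bit t i.
Proof.
  unfold bit. rewrite Nat.pow_succ_r', <- Nat.Div0.div_div.
  f_equal. f_equal.
  replace ((if b then 1 else 0) + 2 * t) with ((if b then 1 else 0) + t * 2) by lia.
  rewrite Nat.div_add by lia. destruct b; simpl; auto.
Qed.

Lemma bit_cons0 (b : bool) t : bit ((if b then 1 else 0) + 2 * t) 0 = if b then 1 else 0.
Proof.
  unfold bit. simpl (2 ^ 0). rewrite Nat.div_1_r, Nat.mul_comm, Nat.Div0.mod_add.
  destruct b; auto.
Qed.

Lemma popcount_bin_value (s : list bool) :
  popcount (bin_value s) (length s) = count_bool true s.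
Proof.
  induction s as [|b s IH]; [reflexivity|]. unfold popcount in *. cbn [bin_value length].
  rewrite natsum_shift, bit_cons0.
  rewrite (natsum_ext _ _ (fun i => bit (bin_value s) i)) by (intros; apply bit_cons).
  rewrite IH. unfold count_bool. destruct b; simpl; auto.
Qed.

Lemma count_false_true (s : list bool) : count_bool false s + count_bool true s = length s.
Proof. induction s as [|b s IH]; simpl; auto. unfold count_bool in *; destruct b; simpl; lia. Qed.

Definition code_length x := natsum x (fun i => if 2 ^ S i <=? S x then 1 else 0).

Lemma code_length_spec (s : list bool) : code_length (code_str s) = length s.
Proof.
  pose proof (code_str_bin_value s). pose proof (bin_value_lt s).
  set (x := code_str s) in *. set (L := length s) in *.
  unfold code_length. rewrite (natsum_ext _ _ (fun i => if i <? L then 1 else 0)).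
  - rewrite natsum_lt_count. assert (L < 2 ^ L) by (apply Nat.pow_gt_lin_r; lia). lia.
  - intros i _. destruct (2 ^ S i <=? S x) eqn:E; destruct (i <? L) eqn:F; auto.
    + apply Nat.leb_le in E. apply Nat.ltb_ge in F.
      assert (HH : 2 ^ S L <= 2 ^ S i) by (apply Nat.pow_le_mono_r; lia).
      rewrite Nat.pow_succ_r' in HH. lia.
    + apply Nat.leb_gt in E. apply Nat.ltb_lt in F.
      assert (2 ^ S i <= 2 ^ L) by (apply Nat.pow_le_mono_r; lia). lia.
Qed.

Lemma length_le_code s : length s <= code_str s.
Proof.
  pose proof (code_str_bin_value s). pose proof (Nat.pow_gt_lin_r 2 (length s) ltac:(lia)). lia.
Qed.

Definition code_zeros x := code_length x - popcount (S x - 2 ^ code_length x) (code_length x).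

Lemma code_zeros_spec (s : list bool) : code_zeros (code_str s) = count_bool false s.
Proof.
  unfold code_zeros. rewrite code_length_spec. pose proof (code_str_bin_value s).
  replace (S (code_str s) - 2 ^ length s) with (bin_value s) by lia.
  rewrite popcount_bin_value. pose proof (count_false_true s). lia.
Qed.

(* The construction, relative to an oracle [fx] (later: the approximation
   f of xi, with [fx (code_str s) p] a rational within 2^-p of xi [s]).
   Stage m works with strings of length [block_len m]; its current interval
   is [numer m / 2^width_exp m, (numer m + 2) / 2^width_exp m], split into
   [nwindows m] windows of width 2^-fine_exp m, the j-th window starting at
   [(window_base m A + j) / 2^fine_exp m] where A = numer m. *)
Section Construction.
Variable fx : nat -> nat -> nat.

(* A natural number within 2 of 2^p xi(s) when x = code_str s and fx x p
   is a rational within 2^-p of xi(s) (see [scaled_approx_close]). *)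
Definition scaled_approx x p :=
  let n := fx x p in
  if 2 * (unpair_fst n / 2) =? unpair_fst n
  then (unpair_fst n / 2 * 2 ^ p) / S (unpair_snd n) else 0.

Definition width_exp m := (m + 2) * (m + 2) - 3.
Definition fine_exp m := width_exp m + 2 * m + 3.
Definition block_len m := 2 ^ (m + 2 * (fine_exp m + 2)).
Definition approx_prec m := block_len m + 2 * m + 6.
Definition nwindows m := 2 ^ (2 * m + 4).
Definition window_base m A := A * 2 ^ (2 * m + 3).

(* 1 if the zero frequency Z / block_len m lies in window j, else 0. *)
Definition in_window m A j Z :=
  (if block_len m * (window_base m A + j) <=? Z * 2 ^ fine_exp m then 1 else 0) *
  (if Z * 2 ^ fine_exp m <? block_len m * (window_base m A + j + 1) then 1 else 0).

(* Approximately 2^approx_prec m times the xi-mass of window j; the string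
   with binary value t has code t + 2^L - 1. *)
Definition window_mass m A j := natsum (2 ^ block_len m) (fun t =>
  in_window m A j (block_len m - popcount t (block_len m)) *
  scaled_approx (t + 2 ^ block_len m - 1) (approx_prec m)).

Definition chosen_window m A := find_first (nwindows m)
  (fun j => if window_mass m A j <=? 3 * 2 ^ S (block_len m) then 1 else 0).

(* The next interval is the middle half of the chosen window. *)
Definition numer m := nat_rect (fun _ => nat) 0
  (fun m A => 4 * (window_base m A + chosen_window m A) + 1) m.

Definition code_in_window m x := in_window m (numer m) (chosen_window m (numer m)) (code_zeros x).

(* Positive iff the string coded by x has the length of some stage m > n and
   lies inside (V) resp. outside (U) the window chosen at that stage. *)
Definition V_count n x := natsum (S x) (fun m =>
  (if n <? m then 1 else 0) * (if block_len m =? code_length x then 1 else 0) *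
  code_in_window m x).
Definition U_count n x := natsum (S x) (fun m =>
  (if n <? m then 1 else 0) * (if block_len m =? code_length x then 1 else 0) *
  (1 - code_in_window m x)).

(* The code of the rational [numer n / 2^width_exp n]. *)
Definition c_approx n := pairing (2 * numer n) (2 ^ width_exp n - 1).
End Construction.

Definition prog_unpair_diag :=
  pSum (pLeb (pMul (pSucc (pArg 0)) (pSucc (pSucc (pArg 0)))) (pMul (pConst 2) (pArg 1)))
       (pArg 0) [pArg 0].
Definition prog_half_tri2 := pDiv (pMul (pArg 0) (pSucc (pArg 0))) (pConst 2).
Definition prog_unpair_snd :=
  pSub (pArg 0) (CComp prog_half_tri2 [CComp prog_unpair_diag [pArg 0]]).
Definition prog_unpair_fst :=
  pSub (CComp prog_unpair_diag [pArg 0]) (CComp prog_unpair_snd [pArg 0]).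
Definition prog_scaled_approx :=
  let n := pOracle (pArg 0) (pArg 1) in
  let a := CComp prog_unpair_fst [n] in
  let b := CComp prog_unpair_snd [n] in
  pIf (pEqb (pMul (pConst 2) (pDiv a (pConst 2))) a)
      (pDiv (pMul (pDiv a (pConst 2)) (pPow2 (pArg 1))) (pSucc b)) (pConst 0).
Definition prog_bit :=
  pSub (pDiv (pArg 0) (pPow2 (pArg 1)))
       (pMul (pConst 2) (pDiv (pDiv (pArg 0) (pPow2 (pArg 1))) (pConst 2))).
Definition prog_popcount := pSum (CComp prog_bit [pArg 1; pArg 0]) (pArg 1) [pArg 0].
Definition prog_width_exp :=
  pSub (pMul (pSucc (pSucc (pArg 0))) (pSucc (pSucc (pArg 0)))) (pConst 3).
Definition prog_fine_exp :=
  pAdd (CComp prog_width_exp [pArg 0]) (pAdd (pMul (pConst 2) (pArg 0)) (pConst 3)).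
Definition prog_block_len :=
  pPow2 (pAdd (pArg 0) (pMul (pConst 2) (pAdd (CComp prog_fine_exp [pArg 0]) (pConst 2)))).
Definition prog_approx_prec :=
  pAdd (CComp prog_block_len [pArg 0]) (pAdd (pMul (pConst 2) (pArg 0)) (pConst 6)).
Definition prog_nwindows := pPow2 (pAdd (pMul (pConst 2) (pArg 0)) (pConst 4)).
Definition prog_window_base :=
  pMul (pArg 1) (pPow2 (pAdd (pMul (pConst 2) (pArg 0)) (pConst 3))).
Definition prog_in_window :=
  let L := CComp prog_block_len [pArg 0] in
  let B := CComp prog_window_base [pArg 0; pArg 1] in
  let ZF := pMul (pArg 3) (pPow2 (CComp prog_fine_exp [pArg 0])) in
  pMul (pLeb (pMul L (pAdd B (pArg 2))) ZF)
       (pLtb ZF (pMul L (pAdd (pAdd B (pArg 2)) (pConst 1)))).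
Definition prog_window_mass :=
  let L := CComp prog_block_len [pArg 1] in
  pSum (pMul (CComp prog_in_window
                [pArg 1; pArg 2; pArg 3; pSub L (CComp prog_popcount [pArg 0; L])])
             (CComp prog_scaled_approx
                [pSub (pAdd (pArg 0) (pPow2 L)) (pConst 1); CComp prog_approx_prec [pArg 1]]))
       (pPow2 (CComp prog_block_len [pArg 0])) [pArg 0; pArg 1; pArg 2].
Definition prog_chosen_window :=
  pFind (pLeb (CComp prog_window_mass [pArg 1; pArg 2; pArg 0])
              (pMul (pConst 3) (pPow2 (pSucc (CComp prog_block_len [pArg 1])))))
        (CComp prog_nwindows [pArg 0]) [pArg 0; pArg 1].
Definition prog_numer :=
  pRec (pConst 0)
       (pAdd (pMul (pConst 4) (pAdd (CComp prog_window_base [pArg 0; pArg 1])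
                                    (CComp prog_chosen_window [pArg 0; pArg 1])))
             (pConst 1))
       (pArg 0) [].
Definition prog_code_length :=
  pSum (pLeb (pPow2 (pSucc (pArg 0))) (pSucc (pArg 1))) (pArg 0) [pArg 0].
Definition prog_code_zeros :=
  let L := CComp prog_code_length [pArg 0] in
  pSub L (CComp prog_popcount [pSub (pSucc (pArg 0)) (pPow2 L); L]).
Definition prog_code_in_window :=
  let A := CComp prog_numer [pArg 0] in
  CComp prog_in_window
    [pArg 0; A; CComp prog_chosen_window [pArg 0; A]; CComp prog_code_zeros [pArg 1]].
Definition prog_stage_guard :=
  pMul (pLtb (pArg 1) (pArg 0))
       (pEqb (CComp prog_block_len [pArg 0]) (CComp prog_code_length [pArg 2])).
Definition prog_V_count :=
  pSum (pMul prog_stage_guard (CComp prog_code_in_window [pArg 0; pArg 2]))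
       (pSucc (pArg 1)) [pArg 0; pArg 1].
Definition prog_U_count :=
  pSum (pMul prog_stage_guard (pSub (pConst 1) (CComp prog_code_in_window [pArg 0; pArg 2])))
       (pSucc (pArg 1)) [pArg 0; pArg 1].
Definition prog_pairing := pAdd (CComp prog_half_tri2 [pAdd (pArg 0) (pArg 1)]) (pArg 1).
Definition prog_c_approx :=
  CComp prog_pairing [pMul (pConst 2) (CComp prog_numer [pArg 0]);
                      pSub (pPow2 (CComp prog_width_exp [pArg 0])) (pConst 1)].

Hint Rewrite run_Comp run_Arg run_Const run_Succ run_Oracle run_Add run_Mul run_Pred
  run_Sub run_Pow2 run_IsZero run_Leb run_Ltb run_Eqb run_NonZero run_If : run.
Ltac run_simpl := repeat (progress (autorewrite with run; cbn [map nth])).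
Ltac run_div :=
  rewrite run_Div; [|run_simpl; try lia; try (apply Nat.neq_0_lt_0, Nat.pow_nonzero; lia)].
Ltac run_divs := repeat (run_simpl; run_div); run_simpl.

Section RunConstruction.
Variable fx : nat -> nat -> nat.
Notation run := (run fx).

Lemma run_unpair_diag l : run prog_unpair_diag l = unpair_diag (nth 0 l 0).
Proof.
  unfold prog_unpair_diag. rewrite run_Sum. run_simpl.
  apply natsum_ext. intros. run_simpl. reflexivity.
Qed.
Hint Rewrite run_unpair_diag : run.

Lemma run_half_tri2 l : run prog_half_tri2 l = tri2 (nth 0 l 0) / 2.
Proof. unfold prog_half_tri2. run_divs. reflexivity. Qed.
Hint Rewrite run_half_tri2 : run.

Lemma run_unpair_snd l : run prog_unpair_snd l = unpair_snd (nth 0 l 0).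
Proof. unfold prog_unpair_snd. run_simpl. reflexivity. Qed.
Hint Rewrite run_unpair_snd : run.

Lemma run_unpair_fst l : run prog_unpair_fst l = unpair_fst (nth 0 l 0).
Proof. unfold prog_unpair_fst. run_simpl. reflexivity. Qed.
Hint Rewrite run_unpair_fst : run.

Lemma run_scaled_approx l : run prog_scaled_approx l = scaled_approx fx (nth 0 l 0) (nth 1 l 0).
Proof.
  unfold prog_scaled_approx, scaled_approx. run_divs.
  destruct (2 * (unpair_fst _ / 2) =? unpair_fst _); reflexivity.
Qed.
Hint Rewrite run_scaled_approx : run.

Lemma run_bit l : run prog_bit l = bit (nth 0 l 0) (nth 1 l 0).
Proof. unfold prog_bit, bit. run_divs. rewrite Nat.Div0.mod_eq. reflexivity. Qed.
Hint Rewrite run_bit : run.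

Lemma run_popcount l : run prog_popcount l = popcount (nth 0 l 0) (nth 1 l 0).
Proof.
  unfold prog_popcount, popcount. rewrite run_Sum. run_simpl.
  apply natsum_ext. intros. run_simpl. reflexivity.
Qed.
Hint Rewrite run_popcount : run.

Lemma run_width_exp l : run prog_width_exp l = width_exp (nth 0 l 0).
Proof. unfold prog_width_exp, width_exp. run_simpl. f_equal. lia. Qed.
Hint Rewrite run_width_exp : run.

Lemma run_fine_exp l : run prog_fine_exp l = fine_exp (nth 0 l 0).
Proof. unfold prog_fine_exp, fine_exp. run_simpl. lia. Qed.
Hint Rewrite run_fine_exp : run.

Lemma run_block_len l : run prog_block_len l = block_len (nth 0 l 0).
Proof. unfold prog_block_len, block_len. run_simpl. reflexivity. Qed.
Hint Rewrite run_block_len : run.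

Lemma run_approx_prec l : run prog_approx_prec l = approx_prec (nth 0 l 0).
Proof. unfold prog_approx_prec, approx_prec. run_simpl. lia. Qed.
Hint Rewrite run_approx_prec : run.

Lemma run_nwindows l : run prog_nwindows l = nwindows (nth 0 l 0).
Proof. unfold prog_nwindows, nwindows. run_simpl. reflexivity. Qed.
Hint Rewrite run_nwindows : run.

Lemma run_window_base l : run prog_window_base l = window_base (nth 0 l 0) (nth 1 l 0).
Proof. unfold prog_window_base, window_base. run_simpl. reflexivity. Qed.
Hint Rewrite run_window_base : run.

Lemma run_in_window l :
  run prog_in_window l = in_window (nth 0 l 0) (nth 1 l 0) (nth 2 l 0) (nth 3 l 0).
Proof. unfold prog_in_window, in_window. run_simpl. reflexivity. Qed.
Hint Rewrite run_in_window : run.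

Lemma run_window_mass l :
  run prog_window_mass l = window_mass fx (nth 0 l 0) (nth 1 l 0) (nth 2 l 0).
Proof.
  unfold prog_window_mass, window_mass. rewrite run_Sum. run_simpl.
  apply natsum_ext. intros. run_simpl. reflexivity.
Qed.
Hint Rewrite run_window_mass : run.

Lemma run_chosen_window l :
  run prog_chosen_window l = chosen_window fx (nth 0 l 0) (nth 1 l 0).
Proof.
  unfold prog_chosen_window, chosen_window. rewrite run_Find. run_simpl.
  f_equal. apply functional_extensionality. intros. run_simpl. reflexivity.
Qed.
Hint Rewrite run_chosen_window : run.

Lemma run_numer l : run prog_numer l = numer fx (nth 0 l 0).
Proof.
  unfold prog_numer, numer. rewrite run_Rec. run_simpl.
  induction (nth 0 l 0); cbn [nat_rect]; auto. run_simpl. rewrite IHn. reflexivity.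
Qed.
Hint Rewrite run_numer : run.

Lemma run_code_length l : run prog_code_length l = code_length (nth 0 l 0).
Proof.
  unfold prog_code_length, code_length. rewrite run_Sum. run_simpl.
  apply natsum_ext. intros. run_simpl. reflexivity.
Qed.
Hint Rewrite run_code_length : run.

Lemma run_code_zeros l : run prog_code_zeros l = code_zeros (nth 0 l 0).
Proof. unfold prog_code_zeros, code_zeros. run_simpl. reflexivity. Qed.
Hint Rewrite run_code_zeros : run.

Lemma run_code_in_window l :
  run prog_code_in_window l = code_in_window fx (nth 0 l 0) (nth 1 l 0).
Proof. unfold prog_code_in_window, code_in_window. run_simpl. reflexivity. Qed.
Hint Rewrite run_code_in_window : run.

Lemma run_stage_guard l : run prog_stage_guard l =
  (if nth 1 l 0 <? nth 0 l 0 then 1 else 0) *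
  (if block_len (nth 0 l 0) =? code_length (nth 2 l 0) then 1 else 0).
Proof. unfold prog_stage_guard. run_simpl. reflexivity. Qed.
Hint Rewrite run_stage_guard : run.

Lemma run_V_count l : run prog_V_count l = V_count fx (nth 0 l 0) (nth 1 l 0).
Proof.
  unfold prog_V_count, V_count. rewrite run_Sum. run_simpl.
  apply natsum_ext. intros. run_simpl. reflexivity.
Qed.

Lemma run_U_count l : run prog_U_count l = U_count fx (nth 0 l 0) (nth 1 l 0).
Proof.
  unfold prog_U_count, U_count. rewrite run_Sum. run_simpl.
  apply natsum_ext. intros. run_simpl. reflexivity.
Qed.

Lemma run_c_approx l : run prog_c_approx l = c_approx fx (nth 0 l 0).
Proof. unfold prog_c_approx, prog_pairing, c_approx, pairing. run_simpl. reflexivity. Qed.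
End RunConstruction.

Section Computability.
Variable cx : code.
Variable fx : nat -> nat -> nat.
Hypothesis Hcx : forall x y, eval cx [x; y] (fx x y).

Lemma c_approx_computable : computable1 (c_approx fx).
Proof.
  exists (plug cx prog_c_approx). intros x.
  replace (c_approx fx x) with (run fx prog_c_approx [x]) by (rewrite run_c_approx; reflexivity).
  apply plug_eval; [exact Hcx | vm_compute; reflexivity].
Qed.

Lemma mu_domain Q (g : list nat -> nat) : prim_prog Q = true ->
  (forall y args, run fx Q (y :: args) = g args) ->
  forall args, (exists y, eval (CMu (plug cx Q)) args y) <-> g args = 0.
Proof.
  intros HQ Hg args. split.
  - intros [y Hy]. inversion Hy; subst.
    pose proof (plug_eval cx fx Hcx Q HQ (y :: args)) as E.
    rewrite Hg in E. pose proof (eval_deterministic _ _ _ H0 _ E). auto.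
  - intros H0. exists 0. constructor.
    + pose proof (plug_eval cx fx Hcx Q HQ (0 :: args)) as E. rewrite Hg, H0 in E. auto.
    + intros; lia.
Qed.

Lemma positive_unif_ce Q (g : nat -> nat -> nat) : prim_prog Q = true ->
  (forall n x, run fx Q [n; x] = g n x) ->
  unif_ce (fun n s => 1 <= g n (code_str s)).
Proof.
  intros HQ Hg.
  set (T := pIsZero (CComp Q [pArg 1; pArg 2])).
  exists (CMu (plug cx T)). intros n s.
  rewrite (mu_domain T (fun args => if g (nth 0 args 0) (nth 1 args 0) =? 0 then 1 else 0)).
  - cbn [nth]. destruct (g n (code_str s) =? 0) eqn:E;
      [apply Nat.eqb_eq in E | apply Nat.eqb_neq in E]; split; intros; try lia; discriminate.
  - unfold T, pIsZero, prog_iszero, pRec, pConst, pArg.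
    destruct Q; try discriminate HQ; simpl in HQ |- *; rewrite ?HQ; reflexivity.
  - intros y args. unfold T. rewrite run_IsZero, run_Comp. cbn [map]. rewrite !run_Arg.
    destruct args as [|a [|b args]]; cbn [nth]; rewrite <- Hg; reflexivity.
Qed.

Lemma U_unif_ce : unif_ce (fun n s => 1 <= U_count fx n (code_str s)).
Proof.
  apply (positive_unif_ce prog_U_count); [vm_compute; reflexivity|].
  intros. apply run_U_count.
Qed.

Lemma V_unif_ce : unif_ce (fun n s => 1 <= V_count fx n (code_str s)).
Proof.
  apply (positive_unif_ce prog_V_count); [vm_compute; reflexivity|].
  intros. apply run_V_count.
Qed.
End Computability.

Open Scope R_scope.

Notation lsum := sum_measure.

Lemma lsum_app g l1 l2 : lsum g (l1 ++ l2) = lsum g l1 + lsum g l2.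
Proof. induction l1; simpl; [lra|]. rewrite IHl1; lra. Qed.

Lemma lsum_map g h (l : list (list bool)) : lsum g (map h l) = lsum (fun s => g (h s)) l.
Proof. induction l; simpl; auto. rewrite IHl; auto. Qed.

Lemma lsum_plus g h l : lsum (fun s => g s + h s) l = lsum g l + lsum h l.
Proof. induction l; simpl; [lra|]. rewrite IHl; lra. Qed.

Lemma lsum_minus g h l : lsum (fun s => g s - h s) l = lsum g l - lsum h l.
Proof. induction l; simpl; [lra|]. rewrite IHl; lra. Qed.

Lemma lsum_scal a g l : lsum (fun s => a * g s) l = a * lsum g l.
Proof. induction l; simpl; [lra|]. rewrite IHl; lra. Qed.

Lemma lsum_ext g h l : (forall s, In s l -> g s = h s) -> lsum g l = lsum h l.
Proof. induction l; simpl; intros; auto. rewrite H, IHl; auto. Qed.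

Lemma lsum_le g h l : (forall s, In s l -> g s <= h s) -> lsum g l <= lsum h l.
Proof.
  induction l; simpl; intros; [lra|].
  pose proof (H a (or_introl eq_refl)). assert (lsum g l <= lsum h l) by auto. lra.
Qed.

Lemma lsum_const a (l : list (list bool)) : lsum (fun _ => a) l = INR (length l) * a.
Proof. induction l; simpl length; simpl lsum; [simpl; lra|]. rewrite S_INR, IHl. lra. Qed.

Lemma lsum_nonneg g l : (forall s, In s l -> 0 <= g s) -> 0 <= lsum g l.
Proof.
  intros H. apply Rle_trans with (lsum (fun _ => 0) l).
  - rewrite lsum_const. lra.
  - apply lsum_le. auto.
Qed.

Lemma lsum_filter g b l : lsum g (filter b l) = lsum (fun s => if b s then g s else 0) l.
Proof. induction l; simpl; auto. destruct (b a); simpl; rewrite IHl; lra. Qed.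

Lemma lsum_incl g l1 l2 :
  (forall s, 0 <= g s) -> NoDup l1 -> incl l1 l2 -> lsum g l1 <= lsum g l2.
Proof.
  intros Hg Hnd. revert l2. induction Hnd as [|a l1 Ha Hnd IH]; intros l2 Hi.
  - simpl. apply lsum_nonneg; auto.
  - assert (Ha2 : In a l2) by (apply Hi; simpl; auto).
    apply in_split in Ha2 as [l2a [l2b ->]].
    rewrite lsum_app. simpl.
    assert (H : lsum g l1 <= lsum g (l2a ++ l2b)).
    { apply IH. intros x Hx. assert (In x (l2a ++ a :: l2b)) by (apply Hi; simpl; auto).
      apply in_app_or in H. apply in_or_app. destruct H as [H|[H|H]]; auto.
      subst; contradiction. }
    rewrite lsum_app in H. lra.
Qed.

Fixpoint rsum (n : nat) (g : nat -> R) : R :=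
  match n with O => 0 | S n => rsum n g + g n end.

Lemma rsum_ext n g h : (forall i, (i < n)%nat -> g i = h i) -> rsum n g = rsum n h.
Proof. induction n; simpl; intros; auto. rewrite IHn, H; auto. Qed.

Lemma rsum_le n g h : (forall i, (i < n)%nat -> g i <= h i) -> rsum n g <= rsum n h.
Proof.
  induction n; simpl; intros; [lra|].
  assert (rsum n g <= rsum n h) by auto. pose proof (H n (Nat.lt_succ_diag_r n)). lra.
Qed.

Lemma rsum_nonneg n g : (forall i, (i < n)%nat -> 0 <= g i) -> 0 <= rsum n g.
Proof.
  induction n; simpl; intros; [lra|].
  assert (0 <= rsum n g) by auto. pose proof (H n (Nat.lt_succ_diag_r n)). lra.
Qed.

Lemma rsum_ge_term n g i : (i < n)%nat -> (forall j, (j < n)%nat -> 0 <= g j) -> g i <= rsum n g.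
Proof.
  induction n; intros Hi Hg; [lia|]. simpl.
  destruct (Nat.eq_dec i n) as [->|Hne].
  - pose proof (rsum_nonneg n g ltac:(auto)). lra.
  - pose proof (IHn ltac:(lia) ltac:(auto)). pose proof (Hg n ltac:(lia)). lra.
Qed.

Lemma rsum_lsum n (g : nat -> list bool -> R) l :
  rsum n (fun i => lsum (g i) l) = lsum (fun s => rsum n (fun i => g i s)) l.
Proof.
  induction n; simpl.
  - induction l; simpl; auto. rewrite <- IHl. lra.
  - rewrite IHn, <- lsum_plus. auto.
Qed.

Lemma sum_cover (g : list bool -> R) (P : nat -> list bool -> bool) n l :
  (forall s, 0 <= g s) ->
  (forall s, In s l -> exists i, (i < n)%nat /\ P i s = true) ->
  lsum g l <= rsum n (fun i => lsum g (filter (P i) l)).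
Proof.
  intros Hg Hcov.
  rewrite (rsum_ext _ _ (fun i => lsum (fun s => if P i s then g s else 0) l))
    by (intros; apply lsum_filter).
  rewrite rsum_lsum. apply lsum_le. intros s Hs.
  destruct (Hcov s Hs) as [i [Hi HP]].
  apply Rle_trans with (if P i s then g s else 0); [rewrite HP; lra|].
  apply (rsum_ge_term n (fun j => if P j s then g s else 0) i Hi).
  intros j _. destruct (P j s); [apply Hg | lra].
Qed.

Fixpoint all_strings (L : nat) : list (list bool) :=
  match L with
  | O => [[]]
  | S L => map (fun s => s ++ [false]) (all_strings L) ++
           map (fun s => s ++ [true]) (all_strings L)
  end.

Lemma all_strings_len L s : In s (all_strings L) <-> length s = L.
Proof.
  revert s; induction L; intros s; simpl.
  - split; [intros [<-|[]]; auto | destruct s; simpl; auto; discriminate].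
  - rewrite in_app_iff, !in_map_iff. split.
    + intros [[x [<- Hx]]|[x [<- Hx]]]; apply IHL in Hx; rewrite length_app; simpl; lia.
    + intros Hl. destruct s as [|b s'] using rev_ind; [discriminate|].
      rewrite length_app in Hl; simpl in Hl.
      assert (Hs' : length s' = L) by lia. apply IHL in Hs'.
      destruct b; [right|left]; exists s'; auto.
Qed.

Lemma all_strings_length L : length (all_strings L) = (2 ^ L)%nat.
Proof. induction L; simpl; auto. rewrite length_app, !length_map, IHL. lia. Qed.

Lemma measure_level_sum xi : is_prob_measure xi -> forall L, lsum xi (all_strings L) = 1.
Proof.
  intros [H0 [_ Hadd]] L. induction L; simpl.
  - rewrite H0; lra.
  - rewrite lsum_app, !lsum_map, <- lsum_plus, <- IHL.
    apply lsum_ext. intros s _. symmetry. apply Hadd.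
Qed.

Lemma natsum_add n m f :
  natsum (n + m) f = (natsum n f + natsum m (fun i => f (n + i)%nat))%nat.
Proof.
  induction m; simpl.
  - rewrite Nat.add_0_r; lia.
  - rewrite Nat.add_succ_r. simpl. rewrite IHm. lia.
Qed.

Lemma natsum_all_strings L G :
  INR (natsum (2 ^ L) G) = lsum (fun s => INR (G (bin_value s))) (all_strings L).
Proof.
  revert G; induction L; intros G; simpl.
  - lra.
  - replace (2 ^ L + (2 ^ L + 0))%nat with (2 ^ L + 2 ^ L)%nat by lia.
    rewrite natsum_add, plus_INR, lsum_app, !lsum_map, !IHL.
    f_equal; apply lsum_ext; intros s Hs; apply all_strings_len in Hs;
      rewrite bin_value_app; subst; do 2 f_equal; lia.
Qed.

Lemma count_app b s b' :
  count_bool b (s ++ [b']) = (count_bool b s + if Bool.eqb b' b then 1 else 0)%nat.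
Proof.
  unfold count_bool. rewrite filter_app, length_app. simpl.
  destruct (Bool.eqb b' b); simpl; lia.
Qed.

Definition zeros (s : list bool) := INR (count_bool false s).

Lemma bernoulli_false p s : bernoulli p (s ++ [false]) = p * bernoulli p s.
Proof. unfold bernoulli. rewrite !count_app. simpl. rewrite Nat.add_0_r, Nat.add_1_r. simpl. ring. Qed.

Lemma bernoulli_true p s : bernoulli p (s ++ [true]) = (1 - p) * bernoulli p s.
Proof. unfold bernoulli. rewrite !count_app. simpl. rewrite Nat.add_0_r, Nat.add_1_r. simpl. ring. Qed.

Lemma zeros_false s : zeros (s ++ [false]) = zeros s + 1.
Proof. unfold zeros. rewrite count_app. simpl. rewrite plus_INR. simpl. lra. Qed.

Lemma zeros_true s : zeros (s ++ [true]) = zeros s.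
Proof. unfold zeros. rewrite count_app. simpl. rewrite Nat.add_0_r. auto. Qed.

Lemma bernoulli_nonneg p s : 0 <= p <= 1 -> 0 <= bernoulli p s.
Proof. intros. unfold bernoulli. apply Rmult_le_pos; apply pow_le; lra. Qed.

Lemma bernoulli_step p L (g : R -> R) :
  lsum (fun s => bernoulli p s * g (zeros s)) (all_strings (S L)) =
  lsum (fun s => bernoulli p s * (p * g (zeros s + 1) + (1 - p) * g (zeros s))) (all_strings L).
Proof.
  simpl. rewrite lsum_app, !lsum_map, <- lsum_plus. apply lsum_ext. intros s _.
  rewrite bernoulli_false, bernoulli_true, zeros_false, zeros_true. ring.
Qed.

Lemma bernoulli_moments p L :
  lsum (fun s => bernoulli p s * 1) (all_strings L) = 1 /\
  lsum (fun s => bernoulli p s * zeros s) (all_strings L) = INR L * p /\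
  lsum (fun s => bernoulli p s * (zeros s * zeros s)) (all_strings L) =
    INR L * p * (1 - p) + (INR L * p) * (INR L * p).
Proof.
  induction L as [|L [H0 [H1 H2]]].
  - simpl. unfold bernoulli, zeros. simpl. split; [|split]; lra.
  - rewrite (bernoulli_step p L (fun _ => 1)), (bernoulli_step p L (fun z => z)),
      (bernoulli_step p L (fun z => z * z)), S_INR.
    set (E k := lsum (fun s => bernoulli p s * k s) (all_strings L)) in *.
    assert (Hlin : forall a b c,
      lsum (fun s => bernoulli p s * (a * (zeros s * zeros s) + b * zeros s + c)) (all_strings L) =
      a * E (fun s => zeros s * zeros s) + b * E zeros + c * E (fun _ => 1)).
    { intros a b c. unfold E. rewrite <- !lsum_scal, <- !lsum_plus. apply lsum_ext; intros; ring. }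
    rewrite (lsum_ext (fun s => bernoulli p s * (p * 1 + (1 - p) * 1))
                      (fun s => bernoulli p s * (0 * (zeros s * zeros s) + 0 * zeros s + 1)))
      by (intros; ring).
    rewrite (lsum_ext (fun s => bernoulli p s * (p * (zeros s + 1) + (1 - p) * zeros s))
                      (fun s => bernoulli p s * (0 * (zeros s * zeros s) + 1 * zeros s + p)))
      by (intros; ring).
    rewrite (lsum_ext
      (fun s => bernoulli p s * (p * ((zeros s + 1) * (zeros s + 1)) + (1 - p) * (zeros s * zeros s)))
      (fun s => bernoulli p s * (1 * (zeros s * zeros s) + (2 * p) * zeros s + p)))
      by (intros; ring).
    rewrite !Hlin. unfold E in *. rewrite H0, H1, H2. split; [|split]; ring.
Qed.

Lemma bernoulli_variance p L :
  lsum (fun s => bernoulli p s * ((zeros s - INR L * p) * (zeros s - INR L * p))) (all_strings L)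
  = INR L * p * (1 - p).
Proof.
  destruct (bernoulli_moments p L) as [H0 [H1 H2]].
  set (a := INR L * p) in *.
  rewrite (lsum_ext _ (fun s => (bernoulli p s * (zeros s * zeros s) + (- 2 * a) * (bernoulli p s * zeros s))
                                + (a * a) * (bernoulli p s * 1))) by (intros; ring).
  rewrite !lsum_plus, !lsum_scal, H0, H1, H2. unfold a. ring.
Qed.

Lemma chebyshev p L d (bad : list bool -> bool) : 0 <= p <= 1 -> 0 < d ->
  (forall s, In s (all_strings L) -> bad s = true ->
     d * d <= (zeros s - INR L * p) * (zeros s - INR L * p)) ->
  lsum (bernoulli p) (filter bad (all_strings L)) <= INR L / 4 / (d * d).
Proof.
  intros Hp Hd Hbad. rewrite lsum_filter.
  assert (Hdd : 0 < d * d) by nra.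
  set (dev s := (zeros s - INR L * p) * (zeros s - INR L * p)).
  apply Rle_trans with (lsum (fun s => / (d * d) * (bernoulli p s * dev s)) (all_strings L)).
  - apply lsum_le. intros s Hs. pose proof (bernoulli_nonneg p s Hp).
    assert (0 <= dev s) by apply Rle_0_sqr.
    destruct (bad s) eqn:E.
    + specialize (Hbad s Hs E). fold (dev s) in Hbad.
      apply Rmult_le_reg_l with (d * d); auto.
      rewrite <- Rmult_assoc, Rinv_r, Rmult_1_l by lra. nra.
    + apply Rmult_le_pos; [left; apply Rinv_0_lt_compat; auto | nra].
  - rewrite lsum_scal. unfold dev. rewrite bernoulli_variance.
    assert (p * (1 - p) <= / 4) by (pose proof (Rle_0_sqr (p - / 2)); unfold Rsqr in *; lra).
    pose proof (pos_INR L).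
    replace (INR L / 4 / (d * d)) with (/ (d * d) * (INR L * / 4)) by (field; lra).
    apply Rmult_le_compat_l; [left; apply Rinv_0_lt_compat; auto | nra].
Qed.

Lemma even_half a : (2 * (a / 2) =? a)%nat = Nat.even a.
Proof.
  destruct (Nat.even a) eqn:E.
  - apply Nat.eqb_eq. apply Nat.even_spec in E. destruct E as [k ->].
    rewrite (Nat.mul_comm 2 k), Nat.div_mul by lia. lia.
  - apply Nat.eqb_neq. intros H. rewrite <- H, Nat.even_even in E. discriminate.
Qed.

Lemma Rabs_le_between a b : Rabs a <= b -> - b <= a <= b.
Proof. unfold Rabs. destruct (Rcase_abs a); intros; lra. Qed.

Lemma nat_div_close x y : (0 < y)%nat -> Rabs (INR (x / y) - INR x / INR y) < 1.
Proof.
  intros Hy. pose proof (Nat.div_mod_eq x y). pose proof (Nat.mod_upper_bound x y ltac:(lia)).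
  assert (Hyr : 0 < INR y) by (apply lt_0_INR; lia).
  assert (D1 : INR y * INR (x / y) <= INR x) by (rewrite <- mult_INR; apply le_INR; lia).
  assert (D2 : INR x < INR y * INR (x / y) + INR y)
    by (rewrite <- mult_INR, <- plus_INR; apply lt_INR; lia).
  assert (E : INR x / INR y = INR (x / y) + (INR x - INR y * INR (x / y)) / INR y)
    by (field; lra).
  rewrite E. replace (INR (x / y) - _) with (- ((INR x - INR y * INR (x / y)) / INR y)) by ring.
  rewrite Rabs_Ropp, Rabs_pos_eq.
  - apply Rmult_lt_reg_r with (INR y); auto. unfold Rdiv. rewrite Rmult_assoc, Rinv_l; lra.
  - apply Rmult_le_pos; [lra | left; apply Rinv_0_lt_compat; auto].
Qed.

(* If the rational coded by [fx x p] is within 2^-p of y >= 0, then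
   [scaled_approx] is within 2 of 2^p y: a nonnegative rational is rounded
   down, a negative one forces y <= 2^-p and is replaced by 0. *)
Lemma scaled_approx_close fx x p y : 0 <= y ->
  Rabs (rat_of_nat (fx x p) - y) <= / 2 ^ p ->
  Rabs (INR (scaled_approx fx x p) - 2 ^ p * y) <= 2.
Proof.
  intros Hy H. unfold rat_of_nat in H. unfold scaled_approx.
  rewrite (unpair_fst_snd (fx x p)) in H.
  set (a := unpair_fst (fx x p)) in *. set (b := unpair_snd (fx x p)) in *.
  assert (Hp : 0 < 2 ^ p) by (apply pow_lt; lra).
  assert (Hb : 0 < INR (S b)) by (apply lt_0_INR; lia).
  assert (Hscale : forall r, Rabs (r - y) <= / 2 ^ p -> Rabs (2 ^ p * r - 2 ^ p * y) <= 1).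
  { intros r Hr. rewrite <- Rmult_minus_distr_l, Rabs_mult, (Rabs_pos_eq (2 ^ p)) by lra.
    apply Rmult_le_compat_l with (r := 2 ^ p) in Hr; [|lra]. rewrite Rinv_r in Hr; lra. }
  rewrite even_half. unfold int_of_nat in H. destruct (Nat.even a).
  - pose proof (nat_div_close (a / 2 * 2 ^ p) (S b) ltac:(lia)) as Hfloor.
    rewrite mult_INR, pow_INR in Hfloor. replace (INR 2) with 2 in Hfloor by (simpl; lra).
    replace (INR (a / 2) * 2 ^ p / INR (S b)) with (2 ^ p * (INR (a / 2) / INR (S b)))
      in Hfloor by (field; lra).
    apply Hscale in H.
    apply Rabs_le_between in H. apply Rlt_le, Rabs_le_between in Hfloor. apply Rabs_le; lra.
  - set (q := INR ((a + 1) / 2) / INR (S b)).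
    assert (Hq : 0 <= q) by (apply Rmult_le_pos; [apply pos_INR | left; apply Rinv_0_lt_compat; auto]).
    replace (- INR ((a + 1) / 2) / INR (S b)) with (- q) in H by (unfold q; field; lra).
    apply Hscale in H. apply Rabs_le_between in H. simpl INR. apply Rabs_le.
    assert (0 <= 2 ^ p * y) by (apply Rmult_le_pos; lra).
    assert (0 <= 2 ^ p * q) by (apply Rmult_le_pos; lra).
    lra.
Qed.

Lemma in_window_01 m A j Z : in_window m A j Z = 0%nat \/ in_window m A j Z = 1%nat.
Proof. unfold in_window. destruct (_ <=? _)%nat; destruct (_ <? _)%nat; auto. Qed.

Lemma in_window_pos m A j Z : in_window m A j Z <> 0%nat <->
  (block_len m * (window_base m A + j) <= Z * 2 ^ fine_exp m /\
   Z * 2 ^ fine_exp m < block_len m * (window_base m A + j + 1))%nat.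
Proof.
  unfold in_window. destruct (_ <=? _)%nat eqn:E1; destruct (_ <? _)%nat eqn:E2;
  [apply Nat.leb_le in E1; apply Nat.ltb_lt in E2 | apply Nat.leb_le in E1; apply Nat.ltb_ge in E2
  | apply Nat.leb_gt in E1; apply Nat.ltb_lt in E2 | apply Nat.leb_gt in E1; apply Nat.ltb_ge in E2];
  simpl; split; intros; try lia.
Qed.

Lemma in_window_unique m A j1 j2 Z :
  in_window m A j1 Z <> 0%nat -> in_window m A j2 Z <> 0%nat -> j1 = j2.
Proof.
  rewrite !in_window_pos. intros [H1 H2] [H3 H4].
  set (L := block_len m) in *. set (B := window_base m A) in *.
  destruct (Nat.lt_trichotomy j1 j2) as [h|[h|h]]; auto.
  - assert (L * (B + j1 + 1) <= L * (B + j2))%nat by (apply Nat.mul_le_mono_l; lia). lia.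
  - assert (L * (B + j2 + 1) <= L * (B + j1))%nat by (apply Nat.mul_le_mono_l; lia). lia.
Qed.

Definition in_window_b m A j (s : list bool) : bool :=
  negb (in_window m A j (count_bool false s) =? 0)%nat.

Lemma INR_in_window m A j s :
  INR (in_window m A j (count_bool false s)) = if in_window_b m A j s then 1 else 0.
Proof.
  unfold in_window_b. destruct (in_window_01 m A j (count_bool false s)) as [E|E]; rewrite E; auto.
Qed.

Definition window_measure (mu : list bool -> R) m A j :=
  lsum mu (filter (in_window_b m A j) (all_strings (block_len m))).

Lemma rsum_uniq K (sel : nat -> bool) x : 0 <= x ->
  (forall j1 j2, sel j1 = true -> sel j2 = true -> j1 = j2) ->
  rsum K (fun j => if sel j then x else 0) <= x.
Proof.
  intros Hx Hu. induction K; simpl; [lra|].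
  destruct (sel K) eqn:E; [|lra].
  assert (rsum K (fun j => if sel j then x else 0) = rsum K (fun _ => 0)).
  { apply rsum_ext. intros i Hi. destruct (sel i) eqn:F; auto. pose proof (Hu i K F E). lia. }
  assert (rsum K (fun _ => 0) = 0) by (clear; induction K; simpl; auto; rewrite IHK; lra).
  lra.
Qed.

Lemma window_measure_sum mu m A : is_prob_measure mu ->
  rsum (nwindows m) (window_measure mu m A) <= 1.
Proof.
  intros Hmu. unfold window_measure.
  rewrite (rsum_ext _ _ (fun j => lsum (fun s => if in_window_b m A j s then mu s else 0)
                                       (all_strings (block_len m))))
    by (intros; apply lsum_filter).
  rewrite rsum_lsum, <- (measure_level_sum mu Hmu (block_len m)). apply lsum_le. intros s _.
  apply rsum_uniq; [apply Hmu|].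
  intros j1 j2 H1 H2. unfold in_window_b in *. apply negb_true_iff, Nat.eqb_neq in H1, H2.
  eapply in_window_unique; eauto.
Qed.

Lemma rsum_gt K g c : (0 < K)%nat -> (forall j, (j < K)%nat -> c < g j) -> INR K * c < rsum K g.
Proof.
  intros HK H. induction K; [lia|]. simpl rsum. rewrite S_INR.
  destruct (Nat.eq_dec K 0).
  - subst. simpl. pose proof (H 0%nat ltac:(lia)). lra.
  - assert (INR K * c < rsum K g) by (apply IHK; [lia | intros; apply H; lia]).
    pose proof (H K ltac:(lia)). lra.
Qed.

Lemma nwindows_pos m : (0 < nwindows m)%nat.
Proof. unfold nwindows. apply Nat.neq_0_lt_0, Nat.pow_nonzero; lia. Qed.

Lemma light_window_exists mu m A : is_prob_measure mu ->
  exists j, (j < nwindows m)%nat /\ window_measure mu m A j <= / INR (nwindows m).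
Proof.
  intros Hmu.
  assert (HK : 0 < INR (nwindows m)) by (apply lt_0_INR, nwindows_pos).
  apply Classical_Prop.NNPP. intros Hno.
  assert (Hheavy : forall j, (j < nwindows m)%nat -> / INR (nwindows m) < window_measure mu m A j).
  { intros j Hj. apply Rnot_le_lt. intros C. apply Hno. eauto. }
  pose proof (rsum_gt _ _ _ (nwindows_pos m) Hheavy). pose proof (window_measure_sum mu m A Hmu).
  rewrite Rinv_r in H by lra. lra.
Qed.

Lemma lsum_close g h l e :
  (forall s, In s l -> Rabs (g s - h s) <= e) ->
  Rabs (lsum g l - lsum h l) <= INR (length l) * e.
Proof.
  intros H. rewrite <- lsum_minus, <- lsum_const. apply Rabs_le. split.
  - replace (- lsum (fun _ => e) l) with (lsum (fun _ => - e) l)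
      by (rewrite !lsum_const; ring).
    apply lsum_le. intros s Hs. pose proof (Rabs_le_between _ _ (H s Hs)). lra.
  - apply lsum_le. intros s Hs. pose proof (Rabs_le_between _ _ (H s Hs)). lra.
Qed.

Lemma find_first_spec n g :
  (find_first n g = n /\ forall i, (i < n)%nat -> g i = 0%nat) \/
  ((find_first n g < n)%nat /\ g (find_first n g) <> 0%nat).
Proof.
  induction n; simpl.
  - left; split; auto; intros; lia.
  - destruct IHn as [[E H]|[E H]].
    + rewrite E, Nat.eqb_refl. destruct (g n =? 0)%nat eqn:G.
      * apply Nat.eqb_eq in G. left. split; [lia|].
        intros i Hi. destruct (Nat.eq_dec i n); subst; auto. apply H; lia.
      * apply Nat.eqb_neq in G. right. rewrite Nat.add_0_r. split; auto.
    + assert (find_first n g =? n = false)%nat as -> by (apply Nat.eqb_neq; lia).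
      right. rewrite Nat.add_0_r. split; auto.
Qed.

Lemma find_first_found n g j : (j < n)%nat -> g j <> 0%nat ->
  (find_first n g < n)%nat /\ g (find_first n g) <> 0%nat.
Proof. intros. destruct (find_first_spec n g) as [[_ H1]|H1]; auto. rewrite H1 in H0; auto; lia. Qed.

Lemma INR_pow2 n : INR (2 ^ n) = 2 ^ n.
Proof. rewrite pow_INR. reflexivity. Qed.

Lemma approx_prec_scale m :
  2 ^ approx_prec m = 4 * (2 ^ block_len m * INR (nwindows m)).
Proof.
  unfold approx_prec, nwindows. rewrite INR_pow2.
  replace (block_len m + 2 * m + 6)%nat with (block_len m + (2 * m + 4) + 2)%nat by lia.
  rewrite !pow_add. simpl (2 ^ 2). ring.
Qed.

Section ChosenWindow.
Variable xi : list bool -> R.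
Variable f : nat -> nat -> nat.
Hypothesis Hxi : is_prob_measure xi.
Hypothesis Hf : forall s n, Rabs (rat_of_nat (f (code_str s) n) - xi s) <= / 2 ^ n.

Lemma window_mass_INR m A j : INR (window_mass f m A j) =
  lsum (fun s => INR (in_window m A j (count_bool false s)) *
                 INR (scaled_approx f (code_str s) (approx_prec m))) (all_strings (block_len m)).
Proof.
  unfold window_mass. rewrite natsum_all_strings. apply lsum_ext. intros s Hs.
  apply all_strings_len in Hs. rewrite mult_INR. f_equal; f_equal; f_equal.
  - rewrite <- Hs, popcount_bin_value. pose proof (count_false_true s). lia.
  - pose proof (code_str_bin_value s). rewrite <- Hs. lia.
Qed.

Lemma window_mass_close m A j :
  Rabs (INR (window_mass f m A j) - 2 ^ approx_prec m * window_measure xi m A j)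
  <= 2 * 2 ^ block_len m.
Proof.
  rewrite window_mass_INR. unfold window_measure. rewrite lsum_filter, <- lsum_scal.
  replace (2 * 2 ^ block_len m) with (INR (length (all_strings (block_len m))) * 2)
    by (rewrite all_strings_length, INR_pow2; ring).
  apply lsum_close. intros s _. rewrite INR_in_window.
  destruct (in_window_b m A j s).
  - rewrite Rmult_1_l. apply scaled_approx_close; [apply Hxi | apply Hf].
  - rewrite Rmult_0_l, Rmult_0_r, Rminus_0_r, Rabs_R0. lra.
Qed.

Lemma light_window_passes m A j : window_measure xi m A j <= / INR (nwindows m) ->
  (window_mass f m A j <= 3 * 2 ^ S (block_len m))%nat.
Proof.
  intros HT. apply INR_le. rewrite mult_INR, INR_pow2. simpl (2 ^ S _).
  replace (INR 3) with 3 by (simpl; lra).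
  pose proof (Rabs_le_between _ _ (window_mass_close m A j)) as [_ Hup].
  rewrite approx_prec_scale in Hup.
  set (X := 2 ^ block_len m) in *. set (Y := INR (nwindows m)) in *.
  assert (HX : 0 < X) by (apply pow_lt; lra).
  assert (HY : 0 < Y) by (apply lt_0_INR, nwindows_pos).
  assert (X * Y * window_measure xi m A j <= X) by
    (apply Rmult_le_reg_r with (/ Y); [apply Rinv_0_lt_compat; auto |];
     replace (X * Y * window_measure xi m A j * / Y) with (X * window_measure xi m A j)
       by (field; lra); nra).
  lra.
Qed.

Lemma passing_window_light m A j : (window_mass f m A j <= 3 * 2 ^ S (block_len m))%nat ->
  window_measure xi m A j <= / 2 ^ S m.
Proof.
  intros Hpass. apply le_INR in Hpass. rewrite mult_INR, INR_pow2 in Hpass.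
  simpl (2 ^ S _) in Hpass. replace (INR 3) with 3 in Hpass by (simpl; lra).
  pose proof (Rabs_le_between _ _ (window_mass_close m A j)) as [Hlow _].
  rewrite approx_prec_scale in Hlow.
  set (X := 2 ^ block_len m) in *. set (T := window_measure xi m A j) in *.
  assert (HX : 0 < X) by (apply pow_lt; lra).
  assert (HY : INR (nwindows m) = 2 ^ S m * 2 ^ S (S (S m)))
    by (unfold nwindows; rewrite INR_pow2, <- pow_add; f_equal; lia).
  rewrite HY in Hlow.
  assert (HT : 0 <= T) by (apply lsum_nonneg; intros; apply Hxi).
  assert (H8 : 8 <= 2 ^ S (S (S m))) by
    (replace 8 with (2 ^ 3) by (simpl; lra); apply Rle_pow; [lra | lia]).
  set (P := 2 ^ S m) in *. set (Q := 2 ^ S (S (S m))) in *.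
  assert (HP : 0 < P) by (apply pow_lt; lra).
  assert (HPQT : P * T * Q <= 2) by (apply Rmult_le_reg_l with (4 * X); nra).
  assert (P * T <= 1) by nra.
  apply Rmult_le_reg_l with P; [lra|]. rewrite Rinv_r by lra. lra.
Qed.

Lemma chosen_window_light m A :
  (chosen_window f m A < nwindows m)%nat /\
  window_measure xi m A (chosen_window f m A) <= / 2 ^ S m.
Proof.
  destruct (light_window_exists xi m A Hxi) as [j0 [Hj0 HT0]].
  set (test j := (if window_mass f m A j <=? 3 * 2 ^ S (block_len m) then 1 else 0)%nat).
  destruct (find_first_found (nwindows m) test j0 Hj0) as [Hlt Hpass].
  { unfold test. rewrite (proj2 (Nat.leb_le _ _) (light_window_passes m A j0 HT0)). lia. }
  fold (chosen_window f m A) in Hlt, Hpass. split; auto.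
  apply passing_window_light. unfold test in Hpass.
  destruct (_ <=? _)%nat eqn:E; [apply Nat.leb_le; auto | lia].
Qed.
End ChosenWindow.

(* Nested intervals.  I_m = [lo_end m, lo_end m + 2 grid m]; as long as the
   chosen windows are genuine windows, each I_(m+1) is the middle half of
   a window of I_m, so the I_m shrink to a point c. *)
Lemma width_exp_S m : width_exp (S m) = (fine_exp m + 2)%nat.
Proof.
  unfold width_exp, fine_exp.
  replace ((S m + 2) * (S m + 2))%nat with ((m + 2) * (m + 2) + 2 * m + 5)%nat by ring.
  assert (4 <= (m + 2) * (m + 2))%nat by (apply (Nat.mul_le_mono 2 (m + 2) 2 (m + 2)); lia).
  unfold width_exp. lia.
Qed.

Lemma width_exp_ge m : (S m <= width_exp m)%nat.
Proof.
  unfold width_exp.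
  assert (m + 4 <= (m + 2) * (m + 2))%nat
    by (replace ((m + 2) * (m + 2))%nat with (m * m + 4 * m + 4)%nat by ring; lia).
  lia.
Qed.

Section NestedIntervals.
Variable f : nat -> nat -> nat.
Hypothesis Hj : forall m, (chosen_window f m (numer f m) < nwindows m)%nat.

Definition lo_end m := INR (numer f m) / 2 ^ width_exp m.
Definition grid m := / 2 ^ width_exp m.

Lemma grid_pos m : 0 < grid m.
Proof. unfold grid. apply Rinv_0_lt_compat, pow_lt; lra. Qed.

Lemma numer_S_INR m : INR (numer f (S m)) =
  INR (numer f m) * 2 ^ (2 * m + 5) + 4 * INR (chosen_window f m (numer f m)) + 1.
Proof.
  change (numer f (S m)) with
    (4 * (window_base m (numer f m) + chosen_window f m (numer f m)) + 1)%nat.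
  unfold window_base. rewrite plus_INR, !mult_INR, plus_INR, mult_INR, INR_pow2.
  replace (2 * m + 5)%nat with (2 * m + 3 + 2)%nat by lia. rewrite (pow_add 2 (2 * m + 3) 2).
  replace (INR 4) with 4 by (simpl; lra). replace (INR 1) with 1 by reflexivity. ring.
Qed.

Lemma width_exp_S_pow m : 2 ^ width_exp (S m) = 2 ^ width_exp m * 2 ^ (2 * m + 5).
Proof. rewrite width_exp_S, <- pow_add. f_equal. unfold fine_exp. lia. Qed.

Lemma lo_end_step m :
  lo_end m <= lo_end (S m) /\ lo_end (S m) + 2 * grid (S m) <= lo_end m + 2 * grid m.
Proof.
  unfold lo_end, grid. rewrite numer_S_INR, width_exp_S_pow.
  set (A := INR (numer f m)). set (j := INR (chosen_window f m (numer f m))).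
  set (P := 2 ^ width_exp m). set (Q := 2 ^ (2 * m + 5)).
  assert (HP : 0 < P) by (apply pow_lt; lra). assert (HQ : 0 < Q) by (apply pow_lt; lra).
  assert (Hj0 : 0 <= j) by apply pos_INR.
  assert (HjQ : 4 * j + 3 <= 2 * Q).
  { pose proof (Hj m) as Hlt. unfold nwindows in Hlt.
    assert (Hle : (chosen_window f m (numer f m) + 1 <= 2 ^ (2 * m + 4))%nat) by lia.
    apply le_INR in Hle. rewrite plus_INR, INR_pow2 in Hle. fold j in Hle.
    assert (Q = 2 * 2 ^ (2 * m + 4))
      by (unfold Q; replace (2 * m + 5)%nat with (S (2 * m + 4)) by lia; reflexivity).
    simpl (INR 1) in Hle. lra. }
  split.
  - apply Rmult_le_reg_l with (P * Q); [nra|].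
    replace (P * Q * (A / P)) with (A * Q) by (field; lra).
    replace (P * Q * ((A * Q + 4 * j + 1) / (P * Q))) with (A * Q + 4 * j + 1)
      by (field; lra). lra.
  - apply Rmult_le_reg_l with (P * Q); [nra|].
    replace (P * Q * ((A * Q + 4 * j + 1) / (P * Q) + 2 * / (P * Q)))
      with (A * Q + 4 * j + 3) by (field; lra).
    replace (P * Q * (A / P + 2 * / P)) with (A * Q + 2 * Q) by (field; lra). lra.
Qed.

Lemma lo_end_mono m k :
  lo_end m <= lo_end (m + k) /\ lo_end (m + k) + 2 * grid (m + k) <= lo_end m + 2 * grid m.
Proof.
  induction k.
  - rewrite Nat.add_0_r; lra.
  - rewrite Nat.add_succ_r. pose proof (lo_end_step (m + k)). lra.
Qed.

Lemma lo_end_bound m m' : lo_end m' <= lo_end m + 2 * grid m.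
Proof.
  destruct (Nat.le_gt_cases m m').
  - replace m' with (m + (m' - m))%nat by lia. pose proof (lo_end_mono m (m' - m)).
    pose proof (grid_pos (m + (m' - m))). lra.
  - replace m with (m' + (m - m'))%nat by lia. pose proof (lo_end_mono m' (m - m')).
    pose proof (grid_pos (m' + (m - m'))). lra.
Qed.

Definition lo_ends (x : R) := exists m, x = lo_end m.

Lemma lo_ends_bound : bound lo_ends.
Proof. exists (lo_end 0 + 2 * grid 0). intros x [m ->]. apply lo_end_bound. Qed.

Lemma lo_ends_inhabited : exists x, lo_ends x.
Proof. exists (lo_end 0). exists 0%nat. auto. Qed.

Definition c_limit : R := proj1_sig (completeness lo_ends lo_ends_bound lo_ends_inhabited).

Lemma c_limit_in m : lo_end m <= c_limit <= lo_end m + 2 * grid m.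
Proof.
  unfold c_limit. destruct (completeness lo_ends lo_ends_bound lo_ends_inhabited) as [c [H1 H2]].
  simpl. split.
  - apply H1. exists m; auto.
  - apply H2. intros x [m' ->]. apply lo_end_bound.
Qed.

Lemma c_limit_01 : 0 <= c_limit <= 1.
Proof.
  pose proof (c_limit_in 0) as H. unfold lo_end, grid, width_exp, numer in H.
  simpl in H. lra.
Qed.

Lemma rat_c_approx n : rat_of_nat (c_approx f n) = lo_end n.
Proof.
  unfold rat_of_nat, c_approx. rewrite unpair_pairing. unfold int_of_nat.
  rewrite Nat.even_even, (Nat.mul_comm 2), Nat.div_mul by lia.
  unfold lo_end. f_equal. pose proof (Nat.pow_nonzero 2 (width_exp n) ltac:(lia)).
  replace (S (2 ^ width_exp n - 1)) with (2 ^ width_exp n)%nat by lia. apply INR_pow2.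
Qed.

Lemma c_limit_approx n : Rabs (rat_of_nat (c_approx f n) - c_limit) <= / 2 ^ n.
Proof.
  rewrite rat_c_approx. pose proof (c_limit_in n). apply Rabs_le.
  assert (/ 2 ^ width_exp n <= / 2 ^ S n)
    by (apply Rinv_le_contravar; [apply pow_lt; lra | apply Rle_pow; [lra | apply width_exp_ge]]).
  assert (/ 2 ^ S n = / 2 * / 2 ^ n) by (simpl; apply Rinv_mult).
  unfold grid in *.
  lra.
Qed.
End NestedIntervals.

Lemma far_from_window L Z G b c : 0 < G -> 0 < L ->
  b + / 4 <= c * G <= b + 3 / 4 ->
  Z * G < L * b \/ L * (b + 1) <= Z * G ->
  L / (4 * G) <= Rabs (Z - L * c).
Proof.
  intros HG HL [Hc1 Hc2] Hout.
  apply Rmult_le_reg_r with G; [exact HG|].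
  replace (L / (4 * G) * G) with (L / 4) by (field; lra).
  replace (Rabs (Z - L * c) * G) with (Rabs ((Z - L * c) * G))
    by (rewrite Rabs_mult, (Rabs_pos_eq G) by lra; reflexivity).
  destruct Hout as [Hlow|Hhigh].
  - rewrite <- Rabs_Ropp. eapply Rle_trans; [|apply Rle_abs]. nra.
  - eapply Rle_trans; [|apply Rle_abs]. nra.
Qed.

Section Tests.
Variable f : nat -> nat -> nat.

Definition in_window_str m s :=
  in_window m (numer f m) (chosen_window f m (numer f m)) (count_bool false s).
Definition U_sel m s := ((block_len m =? length s) && (in_window_str m s =? 0))%nat.
Definition V_sel m s := ((block_len m =? length s) && negb (in_window_str m s =? 0))%nat.

Lemma natsum_pos_iff n g : (1 <= natsum n g)%nat <-> exists i, (i < n)%nat /\ g i <> 0%nat.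
Proof.
  induction n; cbn [natsum].
  - split; [lia | intros [i [Hi _]]; lia].
  - split.
    + intros H. destruct (g n) eqn:E.
      * rewrite Nat.add_0_r in H. apply IHn in H as [i [Hi Hg]]. exists i; split; auto; lia.
      * exists n; split; [lia | rewrite E; discriminate].
    + intros [i [Hi Hg]]. destruct (Nat.eq_dec i n). subst; lia.
      assert (1 <= natsum n g)%nat by (apply IHn; exists i; split; auto; lia). lia.
Qed.

Lemma lt_block_len m : (m < block_len m)%nat.
Proof.
  unfold block_len. pose proof (Nat.pow_gt_lin_r 2 (m + 2 * (fine_exp m + 2)) ltac:(lia)). lia.
Qed.

(* The counters of the construction detect stages m > n of the length of s
   at which the 0/1-valued test h holds; stages beyond the code of s are
   irrelevant since block_len m > m. *)
Lemma stage_count_pos n s (h : nat -> nat) :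
  (1 <= natsum (S (code_str s)) (fun m =>
      (if n <? m then 1 else 0) * (if block_len m =? code_length (code_str s) then 1 else 0) *
      h m))%nat
  <-> exists m, (n < m)%nat /\ block_len m = length s /\ h m <> 0%nat.
Proof.
  rewrite natsum_pos_iff, code_length_spec. split.
  - intros [m [_ H]]. exists m.
    destruct (n <? m)%nat eqn:E1; [|simpl in H; lia].
    destruct (block_len m =? length s)%nat eqn:E2; [|simpl in H; lia].
    apply Nat.ltb_lt in E1. apply Nat.eqb_eq in E2. split; [|split]; auto. lia.
  - intros [m [H1 [H2 H3]]]. exists m. split.
    + pose proof (lt_block_len m). pose proof (length_le_code s). lia.
    + rewrite (proj2 (Nat.ltb_lt _ _) H1), H2, Nat.eqb_refl. lia.
Qed.

Lemma code_in_window_spec m s : code_in_window f m (code_str s) = in_window_str m s.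
Proof. unfold code_in_window, in_window_str. rewrite code_zeros_spec. auto. Qed.

Lemma U_count_pos n s :
  (1 <= U_count f n (code_str s))%nat <-> exists m, (n < m)%nat /\ U_sel m s = true.
Proof.
  unfold U_count. rewrite stage_count_pos. unfold U_sel.
  setoid_rewrite code_in_window_spec. setoid_rewrite andb_true_iff.
  setoid_rewrite Nat.eqb_eq.
  split; intros [m [H1 [H2 H3]]]; exists m; split; auto; split; auto;
    destruct (in_window_01 m (numer f m) (chosen_window f m (numer f m)) (count_bool false s))
      as [E|E]; unfold in_window_str in *; rewrite E in *; simpl in *; lia.
Qed.

Lemma V_count_pos n s :
  (1 <= V_count f n (code_str s))%nat <-> exists m, (n < m)%nat /\ V_sel m s = true.
Proof.
  unfold V_count. rewrite stage_count_pos. unfold V_sel.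
  setoid_rewrite code_in_window_spec. setoid_rewrite andb_true_iff.
  setoid_rewrite Nat.eqb_eq. setoid_rewrite negb_true_iff. setoid_rewrite Nat.eqb_neq.
  split; intros [m [H1 [H2 H3]]]; exists m; auto.
Qed.

Lemma geometric_tail n M :
  rsum M (fun i => if (n <? i)%nat then / 2 ^ S i else 0) <= / 2 ^ n - / 2 ^ Nat.max M n.
Proof.
  induction M; cbn [rsum].
  - rewrite Nat.max_r by lia. lra.
  - destruct (n <? M)%nat eqn:E.
    + apply Nat.ltb_lt in E. rewrite Nat.max_l in IHM by lia. rewrite Nat.max_l by lia.
      assert (0 < 2 ^ M) by (apply pow_lt; lra).
      assert (/ 2 ^ S M = / 2 ^ M / 2) by (simpl; field; lra). lra.
    + apply Nat.ltb_ge in E.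
      assert (/ 2 ^ Nat.max (S M) n <= / 2 ^ Nat.max M n).
      { apply Rinv_le_contravar. apply pow_lt; lra. apply Rle_pow; [lra|lia]. }
      lra.
Qed.

Lemma union_bound (mu : list bool -> R) (sel : nat -> list bool -> bool) n Ls :
  (forall s, 0 <= mu s) ->
  (forall m s, sel m s = true -> length s = block_len m) ->
  (forall m, lsum mu (filter (sel m) (all_strings (block_len m))) <= / 2 ^ S m) ->
  NoDup Ls -> (forall s, In s Ls -> exists m, (n < m)%nat /\ sel m s = true) ->
  lsum mu Ls <= / 2 ^ n.
Proof.
  intros Hmu Hlen Hm Hnd Hin.
  set (M := S (fold_right (fun s acc => length s + acc)%nat 0%nat Ls)).
  assert (HM : forall s, In s Ls -> (length s < M)%nat).
  { intros s Hs. unfold M. clear -Hs. induction Ls; simpl in *; [contradiction|].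
    destruct Hs as [<-|Hs]; [lia|]. specialize (IHLs Hs). lia. }
  apply Rle_trans with (rsum M (fun i => lsum mu (filter (fun s => (n <? i)%nat && sel i s) Ls))).
  - apply sum_cover; auto. intros s Hs. destruct (Hin s Hs) as [m [H1 H2]]. exists m. split.
    + pose proof (Hlen _ _ H2). pose proof (lt_block_len m). pose proof (HM s Hs). lia.
    + rewrite (proj2 (Nat.ltb_lt _ _) H1). auto.
  - apply Rle_trans with (rsum M (fun i => if (n <? i)%nat then / 2 ^ S i else 0)).
    + apply rsum_le. intros i Hi. destruct (n <? i)%nat eqn:E; simpl.
      * apply Rle_trans with (lsum mu (filter (sel i) (all_strings (block_len i)))); auto.
        apply lsum_incl; auto. apply NoDup_filter; auto.
        intros s Hs. apply filter_In in Hs as [Hs1 Hs2]. apply filter_In. split; auto.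
        apply all_strings_len. auto.
      * clear. induction Ls; simpl; [lra|]. auto.
    + pose proof (geometric_tail n M).
      assert (0 < / 2 ^ Nat.max M n) by (apply Rinv_0_lt_compat, pow_lt; lra). lra.
Qed.
End Tests.

(* The Bernoulli test: at stage m, c lies in the middle half of the chosen
   window, so by Chebyshev the strings outside it have mu_c-mass at most
   2^-(m+1). *)
Section BernoulliTest.
Variable f : nat -> nat -> nat.
Hypothesis Hj : forall m, (chosen_window f m (numer f m) < nwindows m)%nat.
Let c := c_limit f Hj.

Lemma c_mid_window m :
  INR (window_base m (numer f m) + chosen_window f m (numer f m)) + / 4
    <= c * 2 ^ fine_exp m <=
  INR (window_base m (numer f m) + chosen_window f m (numer f m)) + 3 / 4.
Proof.
  pose proof (c_limit_in f Hj (S m)) as Hc. fold c in Hc.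
  unfold lo_end, grid in Hc. rewrite width_exp_S, pow_add in Hc.
  change (numer f (S m)) with
    (4 * (window_base m (numer f m) + chosen_window f m (numer f m)) + 1)%nat in Hc.
  rewrite plus_INR, mult_INR in Hc.
  set (b := INR (window_base m (numer f m) + chosen_window f m (numer f m))) in *.
  set (G := 2 ^ fine_exp m) in *. assert (HG : 0 < G) by (apply pow_lt; lra).
  replace (INR 4) with 4 in Hc by (simpl; lra). simpl (INR 1) in Hc. simpl (2 ^ 2) in Hc.
  destruct Hc as [H1 H2]. split.
  - apply Rmult_le_reg_r with (/ G); [apply Rinv_0_lt_compat; auto|].
    replace (c * G * / G) with c by (field; lra).
    eapply Rle_trans; [|exact H1]. right. field. lra.
  - apply Rmult_le_reg_r with (/ G); [apply Rinv_0_lt_compat; auto|].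
    replace (c * G * / G) with c by (field; lra).
    eapply Rle_trans; [exact H2|]. right. field. lra.
Qed.

Lemma outside_window_far m s : length s = block_len m -> in_window_str f m s = 0%nat ->
  (INR (block_len m) * grid (S m)) * (INR (block_len m) * grid (S m)) <=
  (zeros s - INR (block_len m) * c) * (zeros s - INR (block_len m) * c).
Proof.
  intros Hl Hout.
  set (b := (window_base m (numer f m) + chosen_window f m (numer f m))%nat).
  set (Z := count_bool false s). set (L := block_len m) in *.
  assert (Hnot : ~ (L * b <= Z * 2 ^ fine_exp m /\ Z * 2 ^ fine_exp m < L * S b)%nat).
  { intros [H1 H2]. apply (proj2 (in_window_pos m (numer f m) (chosen_window f m (numer f m)) Z));
      [split; [exact H1 | rewrite Nat.add_1_r; exact H2] | exact Hout]. }
  set (G := 2 ^ fine_exp m).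
  assert (HG : 0 < G) by (apply pow_lt; lra).
  assert (HL : 0 < INR L) by (apply lt_0_INR; pose proof (lt_block_len m); lia).
  assert (Hgrid : INR L * grid (S m) = INR L / (4 * G)).
  { unfold grid, G. rewrite width_exp_S, pow_add. simpl (2 ^ 2). field. apply pow_nonzero. lra. }
  assert (Hfar : INR L / (4 * G) <= Rabs (zeros s - INR L * c)).
  { apply (far_from_window _ _ G (INR b)); auto; [apply c_mid_window|].
    unfold zeros, G. fold Z. rewrite <- INR_pow2, <- S_INR, <- !mult_INR.
    destruct (Nat.le_gt_cases (L * b) (Z * 2 ^ fine_exp m)) as [Hle|Hgt].
    - right. apply le_INR. apply Nat.nlt_ge. intros Hlt. apply Hnot. auto.
    - left. apply lt_INR. exact Hgt. }
  rewrite Hgrid.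
  assert (0 <= INR L / (4 * G)) by (apply Rmult_le_pos; [lra | left; apply Rinv_0_lt_compat; lra]).
  set (x := zeros s - INR L * c) in *.
  replace (x * x) with (Rabs x * Rabs x) by (unfold Rabs; destruct (Rcase_abs x); ring).
  apply Rmult_le_compat; auto.
Qed.

Lemma U_stage_small m :
  lsum (bernoulli c) (filter (U_sel f m) (all_strings (block_len m))) <= / 2 ^ S m.
Proof.
  set (W := 2 ^ (fine_exp m + 2)). assert (HW : 0 < W) by (apply pow_lt; lra).
  assert (H2m : 0 < 2 ^ m) by (apply pow_lt; lra).
  assert (EL : INR (block_len m) = 2 ^ m * (W * W)).
  { unfold block_len, W. rewrite INR_pow2.
    replace (2 * (fine_exp m + 2))%nat with ((fine_exp m + 2) + (fine_exp m + 2))%nat by lia.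
    rewrite !pow_add. ring. }
  assert (Eu : grid (S m) = / W) by (unfold grid, W; rewrite width_exp_S; auto).
  eapply Rle_trans.
  - apply (chebyshev c (block_len m) (INR (block_len m) * grid (S m)) (U_sel f m)).
    + apply c_limit_01.
    + rewrite EL, Eu.
      apply Rmult_lt_0_compat; [apply Rmult_lt_0_compat; [lra | nra] | apply Rinv_0_lt_compat; auto].
    + intros s Hs Hsel. apply all_strings_len in Hs. unfold U_sel in Hsel.
      apply andb_true_iff in Hsel as [_ Hc]. apply Nat.eqb_eq in Hc.
      apply outside_window_far; auto.
  - rewrite EL, Eu. simpl (2 ^ S m).
    replace (2 ^ m * (W * W) / 4 / (2 ^ m * (W * W) * / W * (2 ^ m * (W * W) * / W)))
      with (/ (4 * 2 ^ m)) by (field; split; lra).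
    apply Rinv_le_contravar; lra.
Qed.
End BernoulliTest.

Lemma stages_measure_le (mu : list bool -> R) (sel : nat -> list bool -> bool)
  (W : nat -> list bool -> Prop) :
  (forall s, 0 <= mu s) ->
  (forall m s, sel m s = true -> length s = block_len m) ->
  (forall m, lsum mu (filter (sel m) (all_strings (block_len m))) <= / 2 ^ S m) ->
  (forall n s, W n s <-> exists m, (n < m)%nat /\ sel m s = true) ->
  forall n, open_measure_le mu (W n) (/ 2 ^ n).
Proof.
  intros Hmu Hlen Hstage HW n Ls [Hnd _] Hin.
  apply (union_bound mu sel); auto. intros s Hs. apply HW, Hin, Hs.
Qed.

Lemma c_computable f cx (Hcx : forall x y, eval cx [x; y] (f x y)) Hj :
  computable_real (c_limit f Hj).
Proof.
  exists (c_approx f). split; [apply (c_approx_computable cx f Hcx) | apply c_limit_approx].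
Qed.

(* Every sequence is caught by U_n1 or V_n2: at a stage beyond n1 and n2 its
   prefix of the stage's length is inside or outside the chosen window. *)
Lemma caught f (X : nat -> bool) n1 n2 :
  in_open (fun s => 1 <= U_count f n1 (code_str s))%nat X \/
  in_open (fun s => 1 <= V_count f n2 (code_str s))%nat X.
Proof.
  set (m := S (n1 + n2)). set (s := prefix X (block_len m)).
  assert (Hl : length s = block_len m) by (unfold s, prefix; rewrite length_map, length_seq; auto).
  destruct (in_window_str f m s =? 0)%nat eqn:E; [left | right];
    exists (block_len m); fold s; [apply U_count_pos | apply V_count_pos];
    exists m; (split; [unfold m; lia|]);
    [unfold U_sel | unfold V_sel]; rewrite Hl, Nat.eqb_refl, E; reflexivity.
Qed.

Section TheTests.
Variable xi : list bool -> R.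
Variable f : nat -> nat -> nat.
Variable cx : code.
Hypothesis Hxi : is_prob_measure xi.
Hypothesis Hcx : forall x y, eval cx [x; y] (f x y).
Hypothesis Hf : forall s n, Rabs (rat_of_nat (f (code_str s) n) - xi s) <= / 2 ^ n.

Lemma windows_genuine m : (chosen_window f m (numer f m) < nwindows m)%nat.
Proof. apply (chosen_window_light xi f Hxi Hf). Qed.

Lemma V_stage_small m :
  lsum xi (filter (V_sel f m) (all_strings (block_len m))) <= / 2 ^ S m.
Proof.
  destruct (chosen_window_light xi f Hxi Hf m (numer f m)) as [_ H].
  unfold window_measure in H. erewrite filter_ext_in; [exact H|].
  intros s Hs. apply all_strings_len in Hs.
  unfold V_sel, in_window_b, in_window_str. rewrite Hs, Nat.eqb_refl. auto.
Qed.

Lemma V_test : ML_test xi (fun n s => 1 <= V_count f n (code_str s))%nat.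
Proof.
  split; [apply (V_unif_ce cx f Hcx)|].
  apply (stages_measure_le xi (V_sel f)); [apply Hxi | | apply V_stage_small | apply V_count_pos].
  intros m s H. unfold V_sel in H. apply andb_true_iff in H as [H _]. apply Nat.eqb_eq in H. auto.
Qed.

Lemma U_test :
  ML_test (bernoulli (c_limit f windows_genuine)) (fun n s => 1 <= U_count f n (code_str s))%nat.
Proof.
  split; [apply (U_unif_ce cx f Hcx)|].
  apply (stages_measure_le _ (U_sel f));
    [intros; apply bernoulli_nonneg, c_limit_01 | | apply U_stage_small | apply U_count_pos].
  intros m s H. unfold U_sel in H. apply andb_true_iff in H as [H _]. apply Nat.eqb_eq in H. auto.
Qed.
End TheTests.

Theorem mainTheorem7 :
  ~ exists xi : list bool -> R,
      is_prob_measure xi /\ computable_measure xi /\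
      forall c : R, 0 <= c <= 1 -> computable_real c ->
        exists X : nat -> bool, MLR xi X /\ MLR (bernoulli c) X.
Proof.
  intros [xi [Hxi [[f [[cx Hcx] Hf]] Hall]]].
  set (Hj := windows_genuine xi f Hxi Hf).
  destruct (Hall (c_limit f Hj) (c_limit_01 f Hj) (c_computable f cx Hcx Hj))
    as [X [HXxi HXc]].
  destruct (HXc _ (U_test xi f cx Hxi Hcx Hf)) as [n1 Hn1].
  destruct (HXxi _ (V_test xi f cx Hxi Hcx Hf)) as [n2 Hn2].
  destruct (caught f X n1 n2); contradiction.
Qed.
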